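(* Let $\mathcal{C}$ be either $\mathbf{PsTop}$ (pseudotopological spaces) or $\mathbf{Lim}$ (limit spaces). Let $\mathrm{cof}$ be the class of morphisms $i : B \to A$ of $\mathcal{C}$ with the homotopy extension property with respect to the cylinder $IX = X \times [0,1]$, and let $\mathrm{we}$ be the class of homotopy equivalences with respect to this cylinder. Then $(\mathcal{C}, \mathrm{cof}, \mathrm{we})$ is a cofibration category.
   Context: Convergence spaces: a set $X$ with a relation between filters on $X$ and points (written $\lambda \to x$) such that $\lambda \to x$, $\lambda\subseteq\lambda'$ imply $\lambda'\to x$, and the principal ultrafilter $\dot x \to x$. Limit space: additionally $\lambda\to x$, $\lambda'\to x$ imply $\lambda\cap\lambda'\to x$. Pseudotopological space: $\lambda \to x$ iff every ultrafilter containing $\lambda$ converges to $x$. Continuous maps: $\lambda\to x$ implies $f(\lambda)\to f(x)$. $[0,1]$ carries its topological convergence; products and pushouts are initial/final structures in $\mathcal{C}$. Cylinder: $IX = X\times[0,1]$, $i_k(x) = (x,k)$, $p$ the projection. Homotopy extension property of $i : B \to A$: for $k=0,1$, for all $Y$, $f : A \to Y$, $G : IB \to Y$ with $f i = G i_k$, there is $H : IA \to Y$ with $H i_k = f$ and $H \circ Ii = G$. Maps $f,g : X \to Y$ are homotopic if there is $H : IX \to Y$ with $H i_0 = f$, $H i_1 = g$; $f : X\to Y$ is a homotopy equivalence if there is $g : Y \to X$ with $fg$ homotopic to $1_Y$ and $gf$ homotopic to $1_X$. A cofibration category (Baues) is a category with classes $\mathrm{cof}$, $\mathrm{we}$ satisfying: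 (1) isomorphisms are in both classes; 2-out-of-3 for weak equivalences; cofibrations closed under composition; (2) for a cofibration $i : B \to A$ and any $f : B \to Y$ the pushout exists, $\bar i : Y \to A\cup_B Y$ is a cofibration, if $f$ is a weak equivalence so is $\bar f : A \to A \cup_B Y$, and if $i$ is a weak equivalence so is $\bar i$; (3) every map factors as a cofibration followed by a weak equivalence; (4) every object $X$ admits a cofibration $X \to RX$ which is a weak equivalence with $RX$ fibrant, i.e. every cofibration $RX \to Q$ which is a weak equivalence admits a retraction $Q \to RX$. *)

From Stdlib Require Import Reals.
Set Implicit Arguments.
Unset Strict Implicit.
Open Scope R_scope.

Definition is_filter {X : Type} (F : (X -> Prop) -> Prop) : Prop :=
  F (fun _ => True) /\ ~ F (fun _ => False) /\
  (forall A B : X -> Prop, F A -> (forall x, A x -> B x) -> F B) /\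
  (forall A B : X -> Prop, F A -> F B -> F (fun x => A x /\ B x)).

Definition filter_sub {X : Type} (F G : (X -> Prop) -> Prop) : Prop :=
  forall A, F A -> G A.

Definition principal {X : Type} (x : X) : (X -> Prop) -> Prop := fun A => A x.

Definition is_ultrafilter {X : Type} (U : (X -> Prop) -> Prop) : Prop :=
  is_filter U /\ forall G, is_filter G -> filter_sub U G -> filter_sub G U.

Definition img {X Y : Type} (f : X -> Y) (F : (X -> Prop) -> Prop) : (Y -> Prop) -> Prop :=
  fun B => F (fun x => B (f x)).

Definition filter_cap {X : Type} (F G : (X -> Prop) -> Prop) : (X -> Prop) -> Prop :=
  fun A => F A /\ G A.

Record ConvSpace := {
  carrier :> Type;
  conv : ((carrier -> Prop) -> Prop) -> carrier -> Prop }.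

Arguments conv {c} F x.

Definition is_convergence (X : ConvSpace) : Prop :=
  (forall F (x : X), conv F x -> is_filter F) /\
  (forall F G (x : X), conv F x -> is_filter G -> filter_sub F G -> conv G x) /\
  (forall x : X, conv (principal x) x).

Definition is_Lim (X : ConvSpace) : Prop :=
  is_convergence X /\
  (forall F G (x : X), conv F x -> conv G x -> conv (filter_cap F G) x).

Definition is_PsTop (X : ConvSpace) : Prop :=
  is_convergence X /\
  (forall F (x : X), is_filter F ->
     (conv F x <-> forall U, is_ultrafilter U -> filter_sub F U -> conv U x)).

Definition continuous {X Y : ConvSpace} (f : X -> Y) : Prop :=
  forall F (x : X), conv F x -> conv (img f F) (f x).

Definition I01 : Type := { t : R | 0 <= t <= 1 }.

Definition I01_conv (F : (I01 -> Prop) -> Prop) (t : I01) : Prop :=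
  is_filter F /\
  forall eps : R, 0 < eps ->
    F (fun s : I01 => Rabs (proj1_sig s - proj1_sig t) < eps).

Definition I01_space : ConvSpace := {| carrier := I01; conv := I01_conv |}.

Lemma I0_proof : 0 <= 0 <= 1. Proof. split; [apply Rle_refl | apply Rle_0_1]. Qed.
Lemma I1_proof : 0 <= 1 <= 1. Proof. split; [apply Rle_0_1 | apply Rle_refl]. Qed.
Definition I0 : I01 := exist _ 0 I0_proof.
Definition I1 : I01 := exist _ 1 I1_proof.

(** * Cylinder IX = X x [0,1] (product = initial structure w.r.t. projections) *)
Definition cyl_conv (X : ConvSpace) (F : ((X * I01)%type -> Prop) -> Prop)
    (p : (X * I01)%type) : Prop :=
  is_filter F /\ conv (img fst F) (fst p) /\ I01_conv (img snd F) (snd p).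

Definition Cyl (X : ConvSpace) : ConvSpace :=
  {| carrier := (X * I01)%type; conv := @cyl_conv X |}.

Definition incl {X : ConvSpace} (k : I01) : X -> Cyl X := fun x => (x, k).
Definition Icyl {X Y : ConvSpace} (f : X -> Y) : Cyl X -> Cyl Y :=
  fun p => (f (fst p), snd p).

Definition HEP_at (P : ConvSpace -> Prop) (k : I01) {B A : ConvSpace} (i : B -> A) : Prop :=
  forall (Y : ConvSpace), P Y ->
  forall (f : A -> Y) (G : Cyl B -> Y), continuous f -> continuous G ->
    (forall b : B, f (i b) = G (incl k b)) ->
    exists H : Cyl A -> Y, continuous H /\
      (forall a : A, H (incl k a) = f a) /\
      (forall p : Cyl B, H (Icyl i p) = G p).

Definition HEP (P : ConvSpace -> Prop) {B A : ConvSpace} (i : B -> A) : Prop :=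
  HEP_at P I0 i /\ HEP_at P I1 i.

Definition homotopic {X Y : ConvSpace} (f g : X -> Y) : Prop :=
  exists H : Cyl X -> Y, continuous H /\
    (forall x : X, H (incl I0 x) = f x) /\ (forall x : X, H (incl I1 x) = g x).

Definition homotopy_equivalence {X Y : ConvSpace} (f : X -> Y) : Prop :=
  exists g : Y -> X, continuous g /\
    homotopic (fun y => f (g y)) (fun y => y) /\
    homotopic (fun x => g (f x)) (fun x => x).

Definition cof (P : ConvSpace -> Prop) {B A : ConvSpace} (i : B -> A) : Prop :=
  continuous i /\ HEP P i.

Definition we {X Y : ConvSpace} (f : X -> Y) : Prop :=
  continuous f /\ homotopy_equivalence f.

Definition is_iso {X Y : ConvSpace} (f : X -> Y) : Prop :=
  continuous f /\ exists g : Y -> X, continuous g /\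
    (forall x, g (f x) = x) /\ (forall y, f (g y) = y).

Definition is_pushout (P : ConvSpace -> Prop) {B A Y Q : ConvSpace}
    (i : B -> A) (f : B -> Y) (fbar : A -> Q) (ibar : Y -> Q) : Prop :=
  P Q /\ continuous fbar /\ continuous ibar /\
  (forall b : B, fbar (i b) = ibar (f b)) /\
  forall (Z : ConvSpace), P Z -> forall (u : A -> Z) (v : Y -> Z),
    continuous u -> continuous v -> (forall b : B, u (i b) = v (f b)) ->
    exists h : Q -> Z, continuous h /\
      (forall a, h (fbar a) = u a) /\ (forall y, h (ibar y) = v y) /\
      (forall h' : Q -> Z, continuous h' ->
         (forall a, h' (fbar a) = u a) -> (forall y, h' (ibar y) = v y) ->
         forall q, h' q = h q).

Definition fibrant (P : ConvSpace -> Prop) (R : ConvSpace) : Prop :=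
  forall (Q : ConvSpace), P Q -> forall k : R -> Q, cof P k -> we k ->
    exists r : Q -> R, continuous r /\ forall x : R, r (k x) = x.

(** * Baues' axioms of a cofibration category, for the full subcategory of
    convergence spaces satisfying [P], with cof = [cof P] and we = [we]. *)
Definition cofibration_category (P : ConvSpace -> Prop) : Prop :=
  (forall X Y : ConvSpace, P X -> P Y -> forall f : X -> Y,
     is_iso f -> cof P f /\ we f) /\
  (forall X Y Z : ConvSpace, P X -> P Y -> P Z ->
   forall (f : X -> Y) (g : Y -> Z), continuous f -> continuous g ->
     (we f -> we g -> we (fun x => g (f x))) /\
     (we f -> we (fun x => g (f x)) -> we g) /\
     (we g -> we (fun x => g (f x)) -> we f)) /\
  (forall X Y Z : ConvSpace, P X -> P Y -> P Z ->
   forall (f : X -> Y) (g : Y -> Z), cof P f -> cof P g -> cof P (fun x => g (f x))) /\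
  (forall B A Y : ConvSpace, P B -> P A -> P Y ->
   forall (i : B -> A) (f : B -> Y), cof P i -> continuous f ->
     (exists (Q : ConvSpace) (fbar : A -> Q) (ibar : Y -> Q),
        is_pushout P i f fbar ibar) /\
     (forall (Q : ConvSpace) (fbar : A -> Q) (ibar : Y -> Q),
        is_pushout P i f fbar ibar ->
        cof P ibar /\ (we f -> we fbar) /\ (we i -> we ibar))) /\
  (forall X Y : ConvSpace, P X -> P Y -> forall f : X -> Y, continuous f ->
     exists (Z : ConvSpace) (i : X -> Z) (p : Z -> Y),
       P Z /\ cof P i /\ we p /\ forall x, p (i x) = f x) /\
  (forall X : ConvSpace, P X ->
     exists (RX : ConvSpace) (j : X -> RX),
       P RX /\ cof P j /\ we j /\ fibrant P RX).

From Stdlib Require Import Reals Lra Classical FunctionalExtensionality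
  PropExtensionality ProofIrrelevance ClassicalEpsilon.
From mathcomp Require filter.
Open Scope R_scope.

(* Both categories are handled at once: the argument only uses that objects
   are limit spaces and that pushouts exist, are covered by their two legs and
   are preserved by the cylinder functor.  In Lim such a pushout is the
   quotient of A + Y with the finest limit structure making both legs
   continuous; in PsTop it is the pseudotopological modification of that
   quotient.  Limit spaces can be pasted along closed pieces, so homotopies can
   be reversed and concatenated, and homotopy equivalences satisfy 2-out-of-3.
   A trivial cofibration is a strong deformation retract, a property inherited
   by its pushouts; the pushout of a homotopy equivalence along a cofibration
   is handled by factoring the equivalence through its mapping cylinder.
   Finally every object is fibrant, because the HEP of a trivial cofibration
   out of it yields a retraction. *)

(** * Filters *)

Section Filters.
Context {X : Type}.
Implicit Types (F G U : (X -> Prop) -> Prop) (A B C : X -> Prop).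

Lemma filterT {F} : is_filter F -> F (fun _ => True).
Proof. intros [H _]; exact H. Qed.

Lemma filterS {F} A {B} : is_filter F -> F A -> (forall x, A x -> B x) -> F B.
Proof. intros (_ & _ & H & _); apply H. Qed.

Lemma filterI {F A B} : is_filter F -> F A -> F B -> F (fun x => A x /\ B x).
Proof. intros (_ & _ & _ & H); apply H. Qed.

Lemma filter_proper {F A} : is_filter F -> F A -> ~ (forall x, ~ A x).
Proof.
  intros HF HA HN. destruct HF as (_ & H & HS & _).
  apply H, (HS A); [exact HA | exact HN].
Qed.

Lemma is_filter_principal (x : X) : is_filter (principal x).
Proof. unfold principal; split; [| split; [| split]]; auto. Qed.

Lemma is_filter_cap {F G} : is_filter F -> is_filter G -> is_filter (filter_cap F G).
Proof.
  intros HF HG; unfold filter_cap; split; [| split; [| split]].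
  - split; apply filterT; assumption.
  - intros [H _]. exact (proj1 (proj2 HF) H).
  - intros A B [] HAB; split; eapply filterS; eauto.
  - intros A B [] []; split; apply filterI; auto.
Qed.

Definition filter_add F C : (X -> Prop) -> Prop := fun S => F (fun x => C x -> S x).

Lemma is_filter_add {F C} :
  is_filter F -> ~ F (fun x => ~ C x) -> is_filter (filter_add F C).
Proof.
  intros HF HC; unfold filter_add; split; [| split; [| split]].
  - apply (filterS (fun _ => True)); [exact HF | apply filterT, HF | auto].
  - intro H. apply HC. eapply filterS; [exact HF | exact H | auto].
  - intros A B HA HB. eapply filterS; [exact HF | exact HA | auto].
  - intros A B HA HB. eapply filterS; [exact HF | exact (filterI HF HA HB) |].
    intros x [H1 H2] Cx; auto.
Qed.

Lemma filter_add_sub {F} C : is_filter F -> filter_sub F (filter_add F C).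
Proof. intros HF A HA. unfold filter_add. eapply filterS; [exact HF | exact HA | auto]. Qed.

Lemma filter_add_cover {F C} C' :
  is_filter F -> F (fun x => ~ C x) -> (forall x, C x \/ C' x) ->
  filter_sub (filter_add F C') F.
Proof.
  intros HF HC Hcov S HS. eapply filterS; [exact HF | exact (filterI HF HC HS) |].
  intros x [Hn H]. apply H. destruct (Hcov x); tauto.
Qed.

Lemma is_filter_ProperFilter {F} : is_filter F <-> filter.ProperFilter F.
Proof.
  split.
  - intros (HT & HN & HS & HI). constructor; [exact HN |].
    constructor; [exact HT | intros A B; apply HI | intros A B H HA; exact (HS A B HA H)].
  - intros [HN [HT HI HS]]. split; [exact HT | split; [exact HN | split]].
    + intros A B HA H; exact (HS A B H HA).
    + intros A B; apply HI.
Qed.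

Lemma ultrafilter_exists {F} : is_filter F -> exists U, is_ultrafilter U /\ filter_sub F U.
Proof.
  intros HF. apply is_filter_ProperFilter in HF.
  destruct (filter.ultraFilterLemma HF) as (U & [PU maxU] & sFU).
  exists U. split; [split |]; auto.
  - apply is_filter_ProperFilter, PU.
  - intros G HG sUG. apply is_filter_ProperFilter in HG.
    rewrite (maxU G HG sUG). intros A HA; exact HA.
Qed.

Lemma ultrafilter_dec {U} A : is_ultrafilter U -> U A \/ U (fun x => ~ A x).
Proof.
  intros [HU Umax]. destruct (classic (U (fun x => ~ A x))) as [H | H]; [right; exact H | left].
  apply (Umax _ (is_filter_add HU H) (filter_add_sub A HU)). unfold filter_add.
  apply (filterS (fun _ => True)); [exact HU | apply filterT, HU | auto].
Qed.

End Filters.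

Lemma PsTop_is_Lim (S : ConvSpace) : is_PsTop S -> is_Lim S.
Proof.
  intros [HS Hps]. split; [exact HS |]. intros F G x HFx HGx.
  destruct HS as (Hfil & _ & _).
  assert (HF : is_filter F) by (eapply Hfil; eauto).
  assert (HG : is_filter G) by (eapply Hfil; eauto).
  apply (Hps _ x (is_filter_cap HF HG)). intros U HU sub.
  destruct (classic (filter_sub F U)) as [HFU | HFU].
  { exact (proj1 (Hps F x HF) HFx U HU HFU). }
  destruct (classic (filter_sub G U)) as [HGU | HGU].
  { exact (proj1 (Hps G x HG) HGx U HU HGU). }
  exfalso.
  apply not_all_ex_not in HFU as [A HA]; apply imply_to_and in HA as [FA nUA].
  apply not_all_ex_not in HGU as [B HB]; apply imply_to_and in HB as [GB nUB].
  destruct (ultrafilter_dec A HU) as [| UA]; [contradiction |].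
  destruct (ultrafilter_dec B HU) as [| UB]; [contradiction |].
  assert (UAB : U (fun x => A x \/ B x)).
  { apply sub. split; eapply filterS; eauto. }
  apply (filter_proper (proj1 HU) (filterI (proj1 HU) UAB (filterI (proj1 HU) UA UB))).
  intros z (Hab & Hna & Hnb); tauto.
Qed.

Section Images.
Context {X Y : Type} (h : X -> Y).

Lemma is_filter_img F : is_filter F -> is_filter (img h F).
Proof.
  intros HF; unfold img; split; [| split; [| split]].
  - apply filterT, HF.
  - exact (proj1 (proj2 HF)).
  - intros A B HA HB. eapply filterS; [exact HF | exact HA | auto].
  - intros A B HA HB. exact (filterI HF HA HB).
Qed.

Lemma is_ultrafilter_img U : is_ultrafilter U -> is_ultrafilter (img h U).
Proof.
  intros HU. split; [apply is_filter_img, HU |].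
  intros G HG sub T GT. unfold img.
  destruct (ultrafilter_dec (fun x => T (h x)) HU) as [H | H]; [exact H | exfalso].
  apply (filter_proper HG (filterI HG GT (sub (fun y => ~ T y) H))). intros y [H1 H2]; tauto.
Qed.

(* Take an ultrafilter containing [F] and the preimages of the members of [V]. *)
Lemma ultrafilter_lift F V :
  is_filter F -> is_ultrafilter V -> filter_sub (img h F) V ->
  exists U, is_ultrafilter U /\ filter_sub F U /\ filter_sub V (img h U).
Proof.
  intros HF [HV _] sub.
  set (F' := fun S : X -> Prop =>
         exists E T, F E /\ V T /\ forall x, E x -> T (h x) -> S x).
  assert (HF' : is_filter F').
  { unfold F'. split; [| split; [| split]].
    - exists (fun _ => True), (fun _ => True). repeat split; try apply filterT; auto.
    - intros (E & T & FE & VT & K).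
      assert (nT : V (fun y => ~ T y)).
      { apply sub. unfold img. eapply filterS; [exact HF | exact FE |]. exact K. }
      apply (filter_proper HV (filterI HV VT nT)). intros y [H1 H2]; tauto.
    - intros S S' (E & T & FE & VT & K) HS. exists E, T. repeat split; auto.
    - intros S S' (E & T & FE & VT & K) (E' & T' & FE' & VT' & K').
      exists (fun x => E x /\ E' x), (fun y => T y /\ T' y).
      split; [exact (filterI HF FE FE') | split; [exact (filterI HV VT VT') |]].
      intros x [] []; split; auto. }
  destruct (ultrafilter_exists HF') as (U & HU & sU). exists U. split; [exact HU | split].
  - intros S HS. apply sU. exists S, (fun _ => True). repeat split; auto. apply filterT, HV.
  - intros T VT. apply sU. exists (fun _ => True), T. repeat split; auto. apply filterT, HF.
Qed.

End Images.

Definition filter_prod {X Y : Type} (F : (X -> Prop) -> Prop) (G : (Y -> Prop) -> Prop)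
  : (X * Y -> Prop) -> Prop :=
  fun E => exists S T, F S /\ G T /\ forall x y, S x -> T y -> E (x, y).

Section Products.
Context {X Y : Type}.

Lemma is_filter_prod {F : (X -> Prop) -> Prop} {G : (Y -> Prop) -> Prop} :
  is_filter F -> is_filter G -> is_filter (filter_prod F G).
Proof.
  intros HF HG. unfold filter_prod. split; [| split; [| split]].
  - exists (fun _ => True), (fun _ => True). repeat split; try apply filterT; auto.
  - intros (S & T & HS & HT & H). apply (filter_proper HF HS). intros x Sx.
    apply (filter_proper HG HT). intros y Ty. exact (H x y Sx Ty).
  - intros E E' (S & T & HS & HT & H) HE. exists S, T. repeat split; auto.
  - intros E E' (S & T & HS & HT & H) (S' & T' & HS' & HT' & H').
    exists (fun x => S x /\ S' x), (fun y => T y /\ T' y).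
    split; [exact (filterI HF HS HS') | split; [exact (filterI HG HT HT') |]].
    intros x y [] []; split; auto.
Qed.

Lemma filter_prod_img_sub (F : (X * Y -> Prop) -> Prop) :
  is_filter F -> filter_sub (filter_prod (img fst F) (img snd F)) F.
Proof.
  intros HF E (S & T & HS & HT & H). unfold img in HS, HT.
  eapply filterS; [exact HF | exact (filterI HF HS HT) |].
  intros [x y] [Sx Ty]. exact (H x y Sx Ty).
Qed.

Lemma img_fst_prod {F : (X -> Prop) -> Prop} {G : (Y -> Prop) -> Prop} :
  is_filter G -> filter_sub F (img fst (filter_prod F G)).
Proof. intros HG S HS. exists S, (fun _ => True). repeat split; auto. apply filterT, HG. Qed.

Lemma img_snd_prod {F : (X -> Prop) -> Prop} {G : (Y -> Prop) -> Prop} :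
  is_filter F -> filter_sub G (img snd (filter_prod F G)).
Proof. intros HF T HT. exists (fun _ => True), T. repeat split; auto. apply filterT, HF. Qed.

End Products.

(** * The unit interval and continuity *)

Definition val (t : I01) : R := proj1_sig t.

Lemma val_bounds (t : I01) : 0 <= val t <= 1.
Proof. exact (proj2_sig t). Qed.

Lemma val_inj (s t : I01) : val s = val t -> s = t.
Proof.
  destruct s as [s Hs], t as [t Ht]; unfold val; simpl; intros ->.
  f_equal; apply proof_irrelevance.
Qed.

Lemma clamp01_proof (r : R) : 0 <= Rmax 0 (Rmin 1 r) <= 1.
Proof. unfold Rmax, Rmin; repeat destruct Rle_dec; lra. Qed.

Definition clamp01 (r : R) : I01 := exist _ (Rmax 0 (Rmin 1 r)) (clamp01_proof r).

Lemma val_clamp01 r : 0 <= r <= 1 -> val (clamp01 r) = r.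
Proof. intros H; unfold val, clamp01; simpl; unfold Rmax, Rmin; repeat destruct Rle_dec; lra. Qed.

Lemma clamp01_val r t : r = val t -> clamp01 r = t.
Proof. intros ->; apply val_inj, val_clamp01, val_bounds. Qed.

Lemma clamp01_lipschitz r r' : Rabs (val (clamp01 r) - val (clamp01 r')) <= Rabs (r - r').
Proof.
  unfold val, clamp01; simpl; unfold Rmax, Rmin; repeat destruct Rle_dec;
  unfold Rabs; repeat destruct Rcase_abs; lra.
Qed.

Lemma val_I0 : val I0 = 0.
Proof. reflexivity. Qed.

Lemma val_I1 : val I1 = 1.
Proof. reflexivity. Qed.

Lemma I01_rev_proof (t : I01) : 0 <= 1 - val t <= 1.
Proof. pose proof (val_bounds t); lra. Qed.

Definition I01_rev (t : I01) : I01 := exist _ (1 - val t) (I01_rev_proof t).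

Lemma I01_rev_involutive t : I01_rev (I01_rev t) = t.
Proof. apply val_inj; unfold val at 1; simpl; unfold val; simpl; lra. Qed.

Lemma I01_rev_0 : I01_rev I0 = I1.
Proof. apply val_inj; unfold val; simpl; lra. Qed.

Lemma I01_rev_1 : I01_rev I1 = I0.
Proof. apply val_inj; unfold val; simpl; lra. Qed.

Ltac I01_arith := unfold val, clamp01, I01_rev in *; simpl in *; unfold Rmax, Rmin in *;
  repeat destruct Rle_dec; unfold Rabs in *; repeat destruct Rcase_abs; lra.

Definition conv_filters (D : ConvSpace) : Prop := forall F (p : D), conv F p -> is_filter F.

Lemma convergence_conv_filters (D : ConvSpace) : is_convergence D -> conv_filters D.
Proof. intros [H _]; exact H. Qed.

Lemma Lim_convergence (D : ConvSpace) : is_Lim D -> is_convergence D.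
Proof. intros [H _]; exact H. Qed.

Lemma continuous_id {X : ConvSpace} : continuous (fun x : X => x).
Proof. intros F x H; exact H. Qed.

Lemma continuous_comp {X Y Z : ConvSpace} (f : X -> Y) (g : Y -> Z) :
  continuous f -> continuous g -> continuous (fun x => g (f x)).
Proof. intros Hf Hg F x H. exact (Hg _ _ (Hf _ _ H)). Qed.

Lemma continuous_const_I01 {D : ConvSpace} (k : I01) :
  conv_filters D -> @continuous D I01_space (fun _ => k).
Proof.
  intros HD F p H. pose proof (HD _ _ H) as HF. split; [apply is_filter_img, HF |].
  intros e He. unfold img. apply (filterS (fun _ => True)); [exact HF | apply filterT, HF |].
  intros; rewrite Rminus_diag, Rabs_R0; exact He.
Qed.

Section Cylinder.
Context {X : ConvSpace}.

Lemma Cyl_conv_filters : conv_filters (Cyl X).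
Proof. intros F p [H _]; exact H. Qed.

Lemma continuous_fst : @continuous (Cyl X) X fst.
Proof. intros F p (_ & H & _); exact H. Qed.

Lemma continuous_snd : @continuous (Cyl X) I01_space snd.
Proof. intros F p (_ & _ & H); exact H. Qed.

Lemma is_convergence_Cyl : is_convergence X -> is_convergence (Cyl X).
Proof.
  intros (Xfil & Xup & Xpr). split; [exact Cyl_conv_filters | split].
  - intros F G p (HF & H1 & H2) HG sub. split; [exact HG | split].
    + eapply Xup; [exact H1 | apply is_filter_img, HG | intros A HA; apply sub, HA].
    + split; [apply is_filter_img, HG |]. intros e He. apply sub, (proj2 H2 e He).
  - intros [x t]. split; [apply is_filter_principal | split; [apply Xpr |]].
    split; [apply is_filter_img, is_filter_principal |]. intros e He.
    unfold img, principal; simpl. rewrite Rminus_diag, Rabs_R0; exact He.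
Qed.

Lemma Cyl_conv_prod G (x : X) N (t : I01) :
  is_convergence X -> conv G x -> I01_conv N t -> @conv (Cyl X) (filter_prod G N) (x, t).
Proof.
  intros (Xfil & Xup & _) Gx Nt. pose proof (Xfil _ _ Gx) as HG. pose proof (proj1 Nt) as HN.
  pose proof (is_filter_prod HG HN) as HGN.
  split; [exact HGN | split].
  - eapply Xup; [exact Gx | apply is_filter_img, HGN | apply img_fst_prod, HN].
  - split; [apply is_filter_img, HGN |]. intros e He. apply (img_snd_prod HG), (proj2 Nt e He).
Qed.

End Cylinder.

Lemma continuous_pair {D X : ConvSpace} (u : D -> X) (v : D -> I01) :
  conv_filters D -> continuous u -> @continuous D I01_space v ->
  @continuous D (Cyl X) (fun p => (u p, v p)).
Proof.
  intros HD Hu Hv F p H. split; [apply is_filter_img, (HD _ _ H) | split].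
  - exact (Hu _ _ H).
  - exact (Hv _ _ H).
Qed.

Lemma continuous_incl {X : ConvSpace} (k : I01) : is_convergence X -> continuous (@incl X k).
Proof.
  intros HX. apply continuous_pair; [apply convergence_conv_filters, HX | apply continuous_id |].
  apply continuous_const_I01, convergence_conv_filters, HX.
Qed.

Lemma continuous_Icyl {X Y : ConvSpace} (f : X -> Y) : continuous f -> continuous (Icyl f).
Proof.
  intros Hf. unfold Icyl. apply continuous_pair; [apply Cyl_conv_filters | | apply continuous_snd].
  apply (continuous_comp (X := Cyl X) fst f); [apply continuous_fst | exact Hf].
Qed.

Definition rcontinuous {D : ConvSpace} (a : D -> R) : Prop :=
  forall F p, conv F p -> forall e, 0 < e -> F (fun x => Rabs (a x - a p) < e).

Lemma rcontinuous_val {D : ConvSpace} (v : D -> I01) :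
  @continuous D I01_space v -> rcontinuous (fun p => val (v p)).
Proof. intros Hv F p H e He. exact (proj2 (Hv _ _ H) e He). Qed.

Lemma continuous_clamp01 {D : ConvSpace} (a : D -> R) :
  conv_filters D -> rcontinuous a -> @continuous D I01_space (fun p => clamp01 (a p)).
Proof.
  intros HD Ha F p H. pose proof (HD _ _ H) as HF. split; [apply is_filter_img, HF |].
  intros e He. unfold img. eapply filterS; [exact HF | exact (Ha _ _ H e He) |].
  intros x Hx. pose proof (clamp01_lipschitz (a x) (a p)). unfold val in *. lra.
Qed.

Definition lipschitz01 (phi : R -> R -> R) : Prop :=
  exists C, 0 < C /\ forall a b a' b',
    0 <= a <= 1 -> 0 <= b <= 1 -> 0 <= a' <= 1 -> 0 <= b' <= 1 ->
    Rabs (phi a' b' - phi a b) <= C * (Rabs (a' - a) + Rabs (b' - b)).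

Lemma rcontinuous_lipschitz01 {D : ConvSpace} (v w : D -> I01) phi :
  conv_filters D -> @continuous D I01_space v -> @continuous D I01_space w ->
  lipschitz01 phi -> rcontinuous (fun p => phi (val (v p)) (val (w p))).
Proof.
  intros HD Hv Hw (C & HC & Hphi) F p H e He. pose proof (HD _ _ H) as HF.
  set (d := e / (2 * C)).
  assert (Hd : 0 < d) by (unfold d; apply Rdiv_lt_0_compat; lra).
  assert (Hde : C * (2 * d) = e) by (unfold d; field; lra).
  pose proof (filterI HF (rcontinuous_val v Hv _ _ H d Hd) (rcontinuous_val w Hw _ _ H d Hd))
    as Hvw.
  eapply filterS; [exact HF | exact Hvw |]. intros x [Bv Bw].
  pose proof (Hphi (val (v p)) (val (w p)) (val (v x)) (val (w x))
                (val_bounds _) (val_bounds _) (val_bounds _) (val_bounds _)).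
  assert (C * (Rabs (val (v x) - val (v p)) + Rabs (val (w x) - val (w p))) < C * (2 * d))
    by (apply Rmult_lt_compat_l; lra).
  lra.
Qed.

Lemma continuous_lipschitz01 {D : ConvSpace} (v w : D -> I01) phi :
  conv_filters D -> @continuous D I01_space v -> @continuous D I01_space w ->
  lipschitz01 phi -> @continuous D I01_space (fun p => clamp01 (phi (val (v p)) (val (w p)))).
Proof.
  intros; apply continuous_clamp01; [assumption |]. apply rcontinuous_lipschitz01; assumption.
Qed.

Lemma lipschitz01_affine m q phi :
  (forall a b, phi a b = m * a + q) -> lipschitz01 phi.
Proof.
  intros Hphi. exists (Rabs m + 1). split; [pose proof (Rabs_pos m); lra |].
  intros a b a' b' _ _ _ _. rewrite !Hphi.
  replace (m * a' + q - (m * a + q)) with (m * (a' - a)) by ring.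
  rewrite Rabs_mult.
  pose proof (Rabs_pos m); pose proof (Rabs_pos (a' - a)); pose proof (Rabs_pos (b' - b)). nra.
Qed.

Lemma lipschitz01_bilinear m c phi :
  0 <= m -> 0 <= c -> (forall a b, phi a b = m * (a * (c + b))) -> lipschitz01 phi.
Proof.
  intros Hm Hc Hphi. exists (m * (c + 2) + 1). split; [nra |].
  intros a b a' b' Ha Hb Ha' Hb'. rewrite !Hphi.
  replace (m * (a' * (c + b')) - m * (a * (c + b)))
    with (m * ((a' - a) * (c + b') + a * (b' - b))) by ring.
  rewrite Rabs_mult, (Rabs_right m) by lra.
  assert (Rabs ((a' - a) * (c + b') + a * (b' - b)) <= (c + 2) * (Rabs (a' - a) + Rabs (b' - b))).
  { eapply Rle_trans; [apply Rabs_triang |]. rewrite !Rabs_mult.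
    rewrite (Rabs_right (c + b')), (Rabs_right a) by lra.
    pose proof (Rabs_pos (a' - a)); pose proof (Rabs_pos (b' - b)). nra. }
  pose proof (Rabs_pos (a' - a)); pose proof (Rabs_pos (b' - b)). nra.
Qed.

Lemma lipschitz01_tent : lipschitz01 (fun t s => Rmax (Rabs (1 - 2 * t)) s).
Proof.
  exists 2. split; [lra |]. intros a b a' b' _ _ _ _.
  unfold Rmax; repeat destruct Rle_dec; unfold Rabs in *; repeat destruct Rcase_abs; lra.
Qed.

(** * Pasting and homotopies *)

Definition closed_set {D : ConvSpace} (C : D -> Prop) : Prop :=
  forall F p, conv F p -> ~ F (fun x => ~ C x) -> C p.

Lemma closed_set_le {D : ConvSpace} (a : D -> R) c :
  conv_filters D -> rcontinuous a -> closed_set (fun p => a p <= c).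
Proof.
  intros HD Ha F p H HC. apply Rnot_lt_le; intro Hlt. apply HC.
  eapply filterS; [exact (HD _ _ H) | exact (Ha _ _ H (a p - c) ltac:(lra)) |].
  intros x Hx. unfold Rabs in Hx; destruct Rcase_abs in Hx; lra.
Qed.

Lemma closed_set_ge {D : ConvSpace} (a : D -> R) c :
  conv_filters D -> rcontinuous a -> closed_set (fun p => c <= a p).
Proof.
  intros HD Ha F p H HC. apply Rnot_lt_le; intro Hlt. apply HC.
  eapply filterS; [exact (HD _ _ H) | exact (Ha _ _ H (c - a p) ltac:(lra)) |].
  intros x Hx. unfold Rabs in Hx; destruct Rcase_abs in Hx; lra.
Qed.

Section Pasting.
Context {D W : ConvSpace} (H : D -> W).
Hypotheses (HD : is_convergence D) (HW : is_Lim W).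

Lemma conv_img_filter_add (C : D -> Prop) (Hc : D -> W) F p :
  closed_set C -> continuous Hc -> (forall x, C x -> H x = Hc x) ->
  conv F p -> ~ F (fun x => ~ C x) -> conv (img H (filter_add F C)) (H p).
Proof.
  intros closedC contc agree Fp meetC.
  destruct HD as (Dfil & Dup & _). destruct HW as ((_ & Wup & _) & _).
  pose proof (is_filter_add (Dfil _ _ Fp) meetC) as HFC.
  pose proof (contc _ _ (Dup _ _ _ Fp HFC (filter_add_sub C (Dfil _ _ Fp)))) as Kc.
  rewrite (agree p (closedC F p Fp meetC)).
  eapply Wup; [exact Kc | apply is_filter_img, HFC |].
  intros S HS. unfold img, filter_add in *. eapply filterS; [exact (Dfil _ _ Fp) | exact HS |].
  intros x Hx Cx. rewrite agree; auto.
Qed.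

(* The traces of a convergent filter on [C1] and on [C2] converge separately;
   their intersection converges because [W] is a limit space. *)
Lemma continuous_paste (C1 C2 : D -> Prop) (H1 H2 : D -> W) :
  closed_set C1 -> closed_set C2 -> (forall x, C1 x \/ C2 x) ->
  continuous H1 -> continuous H2 ->
  (forall x, C1 x -> H x = H1 x) -> (forall x, C2 x -> H x = H2 x) ->
  continuous H.
Proof.
  intros closed1 closed2 cover cont1 cont2 agree1 agree2 F p Fp.
  pose proof (proj1 HD _ _ Fp) as HF. destruct HW as ((_ & Wup & _) & Wcap).
  pose proof (conv_img_filter_add C1 H1 F p closed1 cont1 agree1 Fp) as piece1.
  pose proof (conv_img_filter_add C2 H2 F p closed2 cont2 agree2 Fp) as piece2.
  assert (not_both : ~ (F (fun x => ~ C1 x) /\ F (fun x => ~ C2 x))).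
  { intros [n1 n2]. apply (filter_proper HF (filterI HF n1 n2)). intros x [].
    destruct (cover x); tauto. }
  destruct (classic (F (fun x => ~ C1 x))) as [n1 | m1];
    [| destruct (classic (F (fun x => ~ C2 x))) as [n2 | m2]].
  - eapply Wup; [exact (piece2 (fun n2 => not_both (conj n1 n2))) | apply is_filter_img, HF |].
    intros S HS. exact (filter_add_cover C2 HF n1 cover _ HS).
  - eapply Wup; [exact (piece1 m1) | apply is_filter_img, HF |].
    intros S HS. refine (filter_add_cover C1 HF n2 _ _ HS). intros x; destruct (cover x); auto.
  - eapply Wup; [exact (Wcap _ _ _ (piece1 m1) (piece2 m2)) | apply is_filter_img, HF |].
    intros S [S1 S2]. unfold img, filter_add in *.
    eapply filterS; [exact HF | exact (filterI HF S1 S2) |].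
    intros x [K1 K2]. destruct (cover x); auto.
Qed.

End Pasting.

Lemma continuous_I01_rev : @continuous I01_space I01_space I01_rev.
Proof.
  intros F t [HF Ht]. split; [apply is_filter_img, HF |]. intros e He. unfold img.
  eapply filterS; [exact HF | exact (Ht e He) |]. intros s Hs. simpl.
  replace (1 - val s - (1 - val t)) with (- (proj1_sig s - proj1_sig t)) by (unfold val; ring).
  rewrite Rabs_Ropp; exact Hs.
Qed.

Section Homotopies.
Context {X Y : ConvSpace}.
Implicit Types (H K : Cyl X -> Y) (f g h : X -> Y).

Definition hrev H : Cyl X -> Y := fun p => H (fst p, I01_rev (snd p)).

Definition hcat H K : Cyl X -> Y := fun p =>
  if Rle_dec (val (snd p)) (1 / 2) then H (fst p, clamp01 (2 * val (snd p)))
  else K (fst p, clamp01 (2 * val (snd p) - 1)).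

Lemma continuous_hrev H : continuous H -> continuous (hrev H).
Proof.
  intros CH.
  apply (continuous_comp (X := Cyl X) (Y := Cyl X) (fun p => (fst p, I01_rev (snd p))) H);
    [| exact CH].
  apply continuous_pair; [apply Cyl_conv_filters | apply continuous_fst |].
  exact (continuous_comp (X := Cyl X) (Y := I01_space) (Z := I01_space) snd I01_rev
           continuous_snd continuous_I01_rev).
Qed.

Lemma continuous_reparam H m q :
  continuous H -> continuous (fun p : Cyl X => H (fst p, clamp01 (m * val (snd p) + q))).
Proof.
  intros CH.
  apply (continuous_comp (X := Cyl X) (Y := Cyl X) (fun p => (fst p, _)) H); [| exact CH].
  apply continuous_pair; [apply Cyl_conv_filters | apply continuous_fst |].
  apply (continuous_lipschitz01 (D := Cyl X) snd snd (fun a _ => m * a + q));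
    [apply Cyl_conv_filters | apply continuous_snd | apply continuous_snd |].
  apply (lipschitz01_affine m q); reflexivity.
Qed.

Lemma continuous_hcat H K :
  is_convergence X -> is_Lim Y -> continuous H -> continuous K ->
  (forall x, H (x, I1) = K (x, I0)) -> continuous (hcat H K).
Proof.
  intros HX HY CH CK HK.
  assert (Cval : rcontinuous (fun p : Cyl X => val (snd p)))
    by exact (rcontinuous_val (D := Cyl X) snd continuous_snd).
  apply (continuous_paste _ (is_convergence_Cyl HX) HY
           (fun p => val (snd p) <= 1 / 2) (fun p => 1 / 2 <= val (snd p))
           (fun p => H (fst p, clamp01 (2 * val (snd p) + 0)))
           (fun p => K (fst p, clamp01 (2 * val (snd p) + -1)))).
  - apply closed_set_le; [apply Cyl_conv_filters | exact Cval].
  - apply closed_set_ge; [apply Cyl_conv_filters | exact Cval].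
  - intros p. destruct (Rle_dec (val (snd p)) (1 / 2)); [left | right]; lra.
  - apply continuous_reparam, CH.
  - apply continuous_reparam, CK.
  - intros [x t] Ht. unfold hcat; simpl in *. destruct Rle_dec; [| lra].
    do 3 f_equal; ring.
  - intros [x t] Ht. unfold hcat; simpl in *. destruct Rle_dec as [Ht' | Ht'].
    + assert (Et : val t = 1 / 2) by lra.
      rewrite (clamp01_val _ I1), (clamp01_val _ I0); [exact (HK x) | |];
        rewrite Et; simpl; unfold val; simpl; lra.
    + do 3 f_equal; ring.
Qed.

Lemma hrev_0 H x : hrev H (x, I0) = H (x, I1).
Proof. unfold hrev; simpl. rewrite I01_rev_0; reflexivity. Qed.

Lemma hrev_1 H x : hrev H (x, I1) = H (x, I0).
Proof. unfold hrev; simpl. rewrite I01_rev_1; reflexivity. Qed.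

Lemma hcat_0 H K x : hcat H K (x, I0) = H (x, I0).
Proof.
  unfold hcat; cbn [fst snd]. rewrite val_I0. destruct Rle_dec; [| lra].
  f_equal; f_equal. apply clamp01_val. rewrite val_I0; ring.
Qed.

Lemma hcat_1 H K x : hcat H K (x, I1) = K (x, I1).
Proof.
  unfold hcat; cbn [fst snd]. rewrite val_I1. destruct Rle_dec; [lra |].
  f_equal; f_equal. apply clamp01_val. rewrite val_I1; ring.
Qed.

Lemma hcat_half H K x r :
  0 <= r <= 2 ->
  hcat H K (x, clamp01 (1 / 2 * r)) =
  if Rle_dec r 1 then H (x, clamp01 r) else K (x, clamp01 (r - 1)).
Proof.
  intros Hr. unfold hcat; cbn [fst snd]. rewrite val_clamp01 by lra.
  destruct Rle_dec, Rle_dec; try lra; do 3 f_equal; field.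
Qed.

Lemma hcat_const H K x y :
  (forall t, H (x, t) = y) -> (forall t, K (x, t) = y) -> forall t, hcat H K (x, t) = y.
Proof. intros HH HK t. unfold hcat; simpl. destruct Rle_dec; auto. Qed.

Lemma homotopic_eq f g : continuous g -> (forall x, f x = g x) -> homotopic f g.
Proof.
  intros Cg Efg. exists (fun p => g (fst p)).
  split; [exact (continuous_comp (X := Cyl X) fst g continuous_fst Cg) |].
  split; intros x; [symmetry; apply Efg | reflexivity].
Qed.

Lemma homotopic_sym f g : homotopic f g -> homotopic g f.
Proof.
  intros (H & CH & H0 & H1). exists (hrev H). split; [apply continuous_hrev, CH |].
  split; intros x; unfold incl; [rewrite hrev_0; apply H1 | rewrite hrev_1; apply H0].
Qed.

Lemma homotopic_trans f g h :
  is_convergence X -> is_Lim Y -> homotopic f g -> homotopic g h -> homotopic f h.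
Proof.
  intros HX HY (H & CH & H0 & H1) (K & CK & K0 & K1). exists (hcat H K).
  split; [apply continuous_hcat; auto; intros x; unfold incl in *; rewrite H1, K0; reflexivity |].
  split; intros x; unfold incl; [rewrite hcat_0; apply H0 | rewrite hcat_1; apply K1].
Qed.

End Homotopies.

Lemma homotopic_comp_l {X Y Z : ConvSpace} (f g : X -> Y) (u : Y -> Z) :
  continuous u -> homotopic f g -> homotopic (fun x => u (f x)) (fun x => u (g x)).
Proof.
  intros Cu (H & CH & H0 & H1). exists (fun p => u (H p)).
  split; [apply continuous_comp; assumption |]. split; intros x; simpl; f_equal; auto.
Qed.

Lemma homotopic_comp_r {W X Y : ConvSpace} (f g : X -> Y) (v : W -> X) :
  continuous v -> homotopic f g -> homotopic (fun w => f (v w)) (fun w => g (v w)).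
Proof.
  intros Cv (H & CH & H0 & H1). exists (fun p => H (Icyl v p)).
  split; [exact (continuous_comp _ H (continuous_Icyl v Cv) CH) |].
  split; intros w; [apply (H0 (v w)) | apply (H1 (v w))].
Qed.

Section WeakEquivalences.
Context {X Y Z : ConvSpace} (f : X -> Y) (g : Y -> Z).
Hypotheses (HX : is_Lim X) (HY : is_Lim Y) (HZ : is_Lim Z).
Hypotheses (Cf : continuous f) (Cg : continuous g).

Let trans {S T : ConvSpace} (u v w : S -> T) (HS : is_Lim S) (HT : is_Lim T) :=
  homotopic_trans u v w (Lim_convergence S HS) HT.

Lemma we_comp : we f -> we g -> we (fun x => g (f x)).
Proof.
  intros (_ & f' & Cf' & ff' & f'f) (_ & g' & Cg' & gg' & g'g).
  split; [apply continuous_comp; assumption |].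
  exists (fun z => f' (g' z)). split; [apply continuous_comp; assumption | split].
  - apply (trans _ (fun z => g (g' z)) _ HZ HZ); [| exact gg'].
    apply (homotopic_comp_l (fun z => f (f' (g' z))) g' g Cg).
    exact (homotopic_comp_r (fun y => f (f' y)) (fun y => y) g' Cg' ff').
  - apply (trans _ (fun x => f' (f x)) _ HX HX); [| exact f'f].
    apply (homotopic_comp_l (fun x => g' (g (f x))) f f' Cf').
    exact (homotopic_comp_r (fun y => g' (g y)) (fun y => y) f Cf g'g).
Qed.

Lemma we_cancel_r : we f -> we (fun x => g (f x)) -> we g.
Proof.
  intros (_ & f' & Cf' & ff' & f'f) (_ & h & Ch & gfh & hgf).
  split; [exact Cg |]. exists (fun z => f (h z)).
  split; [apply continuous_comp; assumption | split; [exact gfh |]].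
  apply (trans _ (fun y => f (h (g (f (f' y))))) _ HY HY).
  - apply homotopic_sym.
    apply (homotopic_comp_l (fun y => f (f' y)) (fun y => y) (fun y => f (h (g y))));
      [| exact ff'].
    apply (continuous_comp g (fun z => f (h z)) Cg), (continuous_comp h f Ch Cf).
  - apply (trans _ (fun y => f (f' y)) _ HY HY); [| exact ff'].
    apply (homotopic_comp_l (fun y => h (g (f (f' y)))) f' f Cf).
    exact (homotopic_comp_r (fun x => h (g (f x))) (fun x => x) f' Cf' hgf).
Qed.

Lemma we_cancel_l : we g -> we (fun x => g (f x)) -> we f.
Proof.
  intros (_ & g' & Cg' & gg' & g'g) (_ & h & Ch & gfh & hgf).
  split; [exact Cf |]. exists (fun y => h (g y)).
  split; [apply continuous_comp; assumption | split; [| exact hgf]].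
  apply (trans _ (fun y => g' (g (f (h (g y))))) _ HY HY).
  - apply homotopic_sym.
    apply (homotopic_comp_r (fun y => g' (g y)) (fun y => y) (fun y => f (h (g y))));
      [| exact g'g].
    apply (continuous_comp g (fun z => f (h z)) Cg), (continuous_comp h f Ch Cf).
  - apply (trans _ (fun y => g' (g y)) _ HY HY); [| exact g'g].
    apply (homotopic_comp_l (fun y => g (f (h (g y)))) g g' Cg').
    exact (homotopic_comp_r (fun z => g (f (h z))) (fun z => z) g Cg gfh).
Qed.

End WeakEquivalences.

Lemma we_iso {X Y : ConvSpace} (f : X -> Y) : is_iso f -> we f.
Proof.
  intros (Cf & g & Cg & gf & fg). split; [exact Cf |]. exists g.
  split; [exact Cg | split; apply homotopic_eq; try exact continuous_id; assumption].
Qed.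

Section HomotopyExtension.
Context (P : ConvSpace -> Prop).

Lemma HEP_at_iso k {B A : ConvSpace} (i : B -> A) : is_iso i -> HEP_at P k i.
Proof.
  intros (Ci & j & Cj & ji & ij) Y PY u G Cu CG Eu.
  exists (fun p => G (Icyl j p)).
  split; [exact (continuous_comp _ G (continuous_Icyl j Cj) CG) | split].
  - intros a. unfold Icyl, incl; simpl. rewrite <- (ij a) at 2. rewrite Eu. reflexivity.
  - intros [b t]. unfold Icyl; simpl. rewrite ji. reflexivity.
Qed.

Lemma HEP_at_comp k {X Y Z : ConvSpace} (f : X -> Y) (g : Y -> Z) :
  continuous g -> HEP_at P k f -> HEP_at P k g -> HEP_at P k (fun x => g (f x)).
Proof.
  intros Cg Hf Hg W PW u G Cu CG Eu.
  destruct (Hf W PW (fun y => u (g y)) G (continuous_comp _ _ Cg Cu) CG Eu) as (H1 & C1 & E1 & F1).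
  destruct (Hg W PW u H1 Cu C1 (fun y => eq_sym (E1 y))) as (H2 & C2 & E2 & F2).
  exists H2. split; [exact C2 | split; [exact E2 |]].
  intros p. rewrite <- F1, <- F2. reflexivity.
Qed.

Lemma HEP_at_1_of_0 {B A : ConvSpace} (i : B -> A) : HEP_at P I0 i -> HEP_at P I1 i.
Proof.
  intros Hi Y PY f G Cf CG Ef.
  destruct (Hi Y PY f (hrev G) Cf (continuous_hrev G CG)) as (K & CK & K0 & Ki).
  { intros b. unfold incl. rewrite hrev_0. apply Ef. }
  exists (hrev K). split; [apply continuous_hrev, CK | split].
  - intros a. unfold incl. rewrite hrev_1. apply K0.
  - intros [b t]. pose proof (Ki (b, I01_rev t)) as Kit.
    unfold hrev, Icyl in *; simpl in *. rewrite Kit, I01_rev_involutive. reflexivity.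
Qed.

Lemma cof_iso {B A : ConvSpace} (i : B -> A) : is_iso i -> cof P i.
Proof. intros Hi. split; [apply Hi | split; apply HEP_at_iso, Hi]. Qed.

Lemma cof_comp {X Y Z : ConvSpace} (f : X -> Y) (g : Y -> Z) :
  cof P f -> cof P g -> cof P (fun x => g (f x)).
Proof.
  intros (Cf & Hf0 & Hf1) (Cg & Hg0 & Hg1).
  split; [apply continuous_comp; assumption | split; apply HEP_at_comp; assumption].
Qed.

End HomotopyExtension.

(** * Pushouts *)

(** A pushout covered by its two legs and preserved by the cylinder functor. *)
Record good_pushout (P : ConvSpace -> Prop) {B A Y Q : ConvSpace}
    (i : B -> A) (f : B -> Y) (fbar : A -> Q) (ibar : Y -> Q) : Prop := {
  gp_pushout : is_pushout P i f fbar ibar;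
  gp_cover : forall q : Q, (exists a, q = fbar a) \/ (exists y, q = ibar y);
  gp_cyl_glue : forall W : ConvSpace, P W ->
    forall (H1 : Cyl A -> W) (H2 : Cyl Y -> W), continuous H1 -> continuous H2 ->
    (forall b t, H1 (i b, t) = H2 (f b, t)) ->
    exists H : Cyl Q -> W, continuous H /\
      (forall a t, H (fbar a, t) = H1 (a, t)) /\ (forall y t, H (ibar y, t) = H2 (y, t)) }.

Section QuotientPushout.
Context {B A Y : ConvSpace} (i : B -> A) (f : B -> Y).
Hypotheses (HA : is_convergence A) (HY : is_convergence Y).

Inductive glue_rel : A + Y -> A + Y -> Prop :=
| glue_refl z : glue_rel z z
| glue_sym z w : glue_rel z w -> glue_rel w z
| glue_trans z w u : glue_rel z w -> glue_rel w u -> glue_rel z u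
| glue_base b : glue_rel (inl (i b)) (inr (f b)).

Definition po_carrier : Type := { S : A + Y -> Prop | exists z, S = glue_rel z }.

Definition po_class (z : A + Y) : po_carrier := exist _ (glue_rel z) (ex_intro _ z eq_refl).

Lemma po_class_eq z w : glue_rel z w -> po_class z = po_class w.
Proof.
  intros Hzw. apply subset_eq_compat.
  apply functional_extensionality; intros u; apply propositional_extensionality.
  split; intros K; [exact (glue_trans w z u (glue_sym z w Hzw) K) | exact (glue_trans z w u Hzw K)].
Qed.

Lemma po_class_surj (q : po_carrier) : exists z, q = po_class z.
Proof. destruct q as [S [z ->]]. exists z. reflexivity. Qed.

Definition po_rep (q : po_carrier) : A + Y :=
  proj1_sig (constructive_indefinite_description _ (po_class_surj q)).

Lemma po_rep_class z : glue_rel (po_rep (po_class z)) z.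
Proof.
  unfold po_rep. destruct constructive_indefinite_description as [w Hw]; simpl.
  apply (f_equal (@proj1_sig _ _)) in Hw. simpl in Hw. rewrite <- Hw. apply glue_refl.
Qed.

Definition po_inl (a : A) : po_carrier := po_class (inl a).
Definition po_inr (y : Y) : po_carrier := po_class (inr y).

Lemma po_inl_inr b : po_inl (i b) = po_inr (f b).
Proof. apply po_class_eq, glue_base. Qed.

Lemma po_cover (q : po_carrier) : (exists a, q = po_inl a) \/ (exists y, q = po_inr y).
Proof. destruct (po_class_surj q) as [[a | y] ->]; [left | right]; eexists; reflexivity. Qed.

(** The finest limit structure making [po_inl] and [po_inr] continuous. *)
Inductive po_lim (F : (po_carrier -> Prop) -> Prop) (q : po_carrier) : Prop :=
| po_lim_inl G a : conv G a -> po_inl a = q -> filter_sub (img po_inl G) F -> po_lim F q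
| po_lim_inr G y : conv G y -> po_inr y = q -> filter_sub (img po_inr G) F -> po_lim F q
| po_lim_cap F1 F2 : is_filter F1 -> is_filter F2 -> po_lim F1 q -> po_lim F2 q ->
    filter_sub (filter_cap F1 F2) F -> po_lim F q.

Definition po_space : ConvSpace :=
  {| carrier := po_carrier; conv := fun F q => is_filter F /\ po_lim F q |}.

Lemma po_space_Lim : is_Lim po_space.
Proof.
  split; [split; [| split] |].
  - intros F q [HF _]; exact HF.
  - intros F G q [HF L] HG sub. split; [exact HG |].
    apply (po_lim_cap G q F F HF HF L L). intros S [S1 _]; auto.
  - intros q. split; [apply is_filter_principal |]. destruct (po_class_surj q) as [[a | y] ->].
    + apply (po_lim_inl _ _ (principal a) a); [apply HA | reflexivity | intros S HS; exact HS].
    + apply (po_lim_inr _ _ (principal y) y); [apply HY | reflexivity | intros S HS; exact HS].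
  - intros F G q [HF L1] [HG L2]. split; [exact (is_filter_cap HF HG) |].
    apply (po_lim_cap _ q F G HF HG L1 L2). intros S HS; exact HS.
Qed.

Lemma continuous_po_inl : @continuous A po_space po_inl.
Proof.
  intros G a H. split; [apply is_filter_img, (proj1 HA _ _ H) |].
  apply (po_lim_inl _ _ G a H eq_refl). intros S HS; exact HS.
Qed.

Lemma continuous_po_inr : @continuous Y po_space po_inr.
Proof.
  intros G y H. split; [apply is_filter_img, (proj1 HY _ _ H) |].
  apply (po_lim_inr _ _ G y H eq_refl). intros S HS; exact HS.
Qed.

Section Descent.
Context {W : ConvSpace} (u : A -> W) (v : Y -> W).
Hypothesis (Euv : forall b, u (i b) = v (f b)).

Definition po_copair (z : A + Y) : W := match z with inl a => u a | inr y => v y end.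

Lemma po_copair_glue z w : glue_rel z w -> po_copair z = po_copair w.
Proof. induction 1; simpl; congruence. Qed.

Definition po_desc (q : po_carrier) : W := po_copair (po_rep q).

Lemma po_desc_inl a : po_desc (po_inl a) = u a.
Proof. exact (po_copair_glue _ _ (po_rep_class (inl a))). Qed.

Lemma po_desc_inr y : po_desc (po_inr y) = v y.
Proof. exact (po_copair_glue _ _ (po_rep_class (inr y))). Qed.

Lemma continuous_po_desc : is_Lim W -> continuous u -> continuous v ->
  @continuous po_space W po_desc.
Proof.
  intros ((_ & Wup & _) & Wcap) Cu Cv F q [HF L]. revert HF.
  induction L as [F q G a Ga <- sub | F q G y Gy <- sub | F q F1 F2 HF1 HF2 L1 IH1 L2 IH2 sub];
    intros HF.
  - rewrite po_desc_inl. eapply Wup; [exact (Cu _ _ Ga) | apply is_filter_img, HF |].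
    intros S HS. apply sub. unfold img in *.
    eapply filterS; [exact (proj1 HA _ _ Ga) | exact HS |].
    intros x Hx; rewrite po_desc_inl; exact Hx.
  - rewrite po_desc_inr. eapply Wup; [exact (Cv _ _ Gy) | apply is_filter_img, HF |].
    intros S HS. apply sub. unfold img in *.
    eapply filterS; [exact (proj1 HY _ _ Gy) | exact HS |].
    intros x Hx; rewrite po_desc_inr; exact Hx.
  - eapply Wup; [exact (Wcap _ _ _ (IH1 HF1) (IH2 HF2)) | apply is_filter_img, HF |].
    intros S HS. apply sub, HS.
Qed.

End Descent.

Lemma po_space_pushout : is_pushout is_Lim i f (po_inl : A -> po_space) (po_inr : Y -> po_space).
Proof.
  split; [exact po_space_Lim |].
  split; [exact continuous_po_inl | split; [exact continuous_po_inr | split; [exact po_inl_inr |]]].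
  intros Z HZ u v Cu Cv Euv. exists (po_desc u v).
  split; [exact (continuous_po_desc u v Euv HZ Cu Cv) |].
  split; [exact (po_desc_inl u v Euv) | split; [exact (po_desc_inr u v Euv) |]].
  intros h _ hu hv q. destruct (po_cover q) as [[a ->] | [y ->]].
  - rewrite hu, po_desc_inl; auto.
  - rewrite hv, po_desc_inr; auto.
Qed.

Section CylinderDescent.
Context {W : ConvSpace} (H1 : Cyl A -> W) (H2 : Cyl Y -> W).
Hypothesis (E12 : forall b t, H1 (i b, t) = H2 (f b, t)).
Hypotheses (HW : is_Lim W) (C1 : continuous H1) (C2 : continuous H2).

Definition po_cyl_desc (p : Cyl po_space) : W :=
  po_desc (fun a => H1 (a, snd p)) (fun y => H2 (y, snd p)) (fst p).

Lemma po_cyl_desc_inl a t : po_cyl_desc (po_inl a, t) = H1 (a, t).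
Proof. exact (po_desc_inl _ _ (fun b => E12 b t) a). Qed.

Lemma po_cyl_desc_inr y t : po_cyl_desc (po_inr y, t) = H2 (y, t).
Proof. exact (po_desc_inr _ _ (fun b => E12 b t) y). Qed.

Lemma conv_po_cyl_desc_leg {S : ConvSpace} (e : S -> po_carrier) (K : Cyl S -> W) G s F N t :
  is_filter F -> is_convergence S -> continuous K ->
  (forall s t, po_cyl_desc (e s, t) = K (s, t)) ->
  conv G s -> filter_sub (img e G) F -> I01_conv N t ->
  conv (img po_cyl_desc (filter_prod F N)) (po_cyl_desc (e s, t)).
Proof.
  intros HF HS CK EK Gs sub Nt. destruct HW as ((_ & Wup & _) & _).
  pose proof (proj1 HS _ _ Gs) as HG. pose proof (proj1 Nt) as HN.
  rewrite EK. eapply Wup; [exact (CK _ _ (Cyl_conv_prod G s N t HS Gs Nt)) |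
                           apply is_filter_img, (is_filter_prod HF HN) |].
  intros E (S1 & T1 & GS1 & NT1 & HE). unfold img.
  exists (fun q => exists s', S1 s' /\ q = e s'), T1. split; [| split; [exact NT1 |]].
  - apply sub. unfold img. eapply filterS; [exact HG | exact GS1 |]. intros s' Hs'; eauto.
  - intros q t' (s' & Hs' & ->) Ht'. rewrite EK. exact (HE s' t' Hs' Ht').
Qed.

Lemma conv_po_cyl_desc F q N t :
  is_filter F -> po_lim F q -> I01_conv N t ->
  conv (img po_cyl_desc (filter_prod F N)) (po_cyl_desc (q, t)).
Proof.
  intros HF L. revert HF.
  induction L as [F q G a Ga <- sub | F q G y Gy <- sub | F q F1 F2 HF1 HF2 L1 IH1 L2 IH2 sub];
    intros HF Nt.
  - exact (conv_po_cyl_desc_leg po_inl H1 G a F N t HF HA C1 po_cyl_desc_inl Ga sub Nt).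
  - exact (conv_po_cyl_desc_leg po_inr H2 G y F N t HF HY C2 po_cyl_desc_inr Gy sub Nt).
  - destruct HW as ((_ & Wup & _) & Wcap). pose proof (proj1 Nt) as HN.
    eapply Wup; [exact (Wcap _ _ _ (IH1 HF1 Nt) (IH2 HF2 Nt)) |
                 apply is_filter_img, (is_filter_prod HF HN) |].
    intros S [(S1 & T1 & FS1 & NT1 & HS1) (S2 & T2 & FS2 & NT2 & HS2)]. unfold img.
    exists (fun q' => S1 q' \/ S2 q'), (fun t' => T1 t' /\ T2 t').
    split; [| split; [exact (filterI HN NT1 NT2) |]].
    + apply sub. split; [eapply filterS; [exact HF1 | exact FS1 |] |
                         eapply filterS; [exact HF2 | exact FS2 |]]; auto.
    + intros q' t' [K | K] [K1 K2]; auto.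
Qed.

Lemma continuous_po_cyl_desc : @continuous (Cyl po_space) W po_cyl_desc.
Proof.
  intros F [q t] (HF & [Hq L] & Ht). destruct HW as ((_ & Wup & _) & _).
  eapply Wup; [exact (conv_po_cyl_desc _ q _ t Hq L Ht) | apply is_filter_img, HF |].
  intros S HS. exact (filter_prod_img_sub F HF _ HS).
Qed.

End CylinderDescent.

End QuotientPushout.

Lemma po_space_good_pushout {B A Y : ConvSpace} (i : B -> A) (f : B -> Y) :
  is_convergence A -> is_convergence Y ->
  good_pushout is_Lim i f (po_inl i f : A -> po_space i f) (po_inr i f).
Proof.
  intros HA HY. split; [exact (po_space_pushout i f HA HY) | exact (po_cover i f) |].
  intros W HW H1 H2 C1 C2 E12. exists (po_cyl_desc i f H1 H2).
  split; [exact (continuous_po_cyl_desc i f HA HY H1 H2 E12 HW C1 C2) |].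
  split; [exact (po_cyl_desc_inl i f H1 H2 E12) | exact (po_cyl_desc_inr i f H1 H2 E12)].
Qed.

Lemma PsTop_conv_img {S W : ConvSpace} (h : S -> W) F w :
  is_PsTop W -> is_filter F ->
  (forall U, is_ultrafilter U -> filter_sub F U -> conv (img h U) w) -> conv (img h F) w.
Proof.
  intros ((_ & Wup & _) & WP) HF HU. apply (WP _ _ (is_filter_img h F HF)). intros V HV sub.
  destruct (ultrafilter_lift h F V HF HV sub) as (U & HU' & sFU & sVU).
  eapply Wup; [exact (HU U HU' sFU) | apply HV |].
  apply (proj2 HV); [apply is_filter_img, HU' | exact sVU].
Qed.

(** The pseudotopological modification: the coarsest pseudotopology finer than
    the given convergence. *)
Definition pstop_mod (X : ConvSpace) : ConvSpace :=
  {| carrier := X;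
     conv := fun F x => is_filter F /\
       forall U, is_ultrafilter U -> filter_sub F U -> conv U x |}.

Section PseudotopologicalModification.
Context {X : ConvSpace} (HX : is_convergence X).

Lemma pstop_mod_PsTop : is_PsTop (pstop_mod X).
Proof.
  destruct HX as (Xfil & Xup & Xpr). split; [split; [| split] |].
  - intros F x [HF _]; exact HF.
  - intros F G x [HF H] HG sub. split; [exact HG |].
    intros U HU sub'. apply H; [exact HU |]. intros S HS; apply sub', sub, HS.
  - intros x. split; [apply is_filter_principal |].
    intros U HU sub. exact (Xup _ _ _ (Xpr x) (proj1 HU) sub).
  - intros F x HF. split.
    + intros [_ H] U HU sub. split; [exact (proj1 HU) |].
      intros U' HU' sub'. exact (Xup _ _ _ (H U HU sub) (proj1 HU') sub').
    + intros H. split; [exact HF |]. intros U HU sub.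
      apply (proj2 (H U HU sub) U HU). intros S HS; exact HS.
Qed.

Lemma continuous_to_pstop_mod {A : ConvSpace} (u : A -> X) :
  continuous u -> @continuous A (pstop_mod X) u.
Proof.
  intros Cu F a H. pose proof (Cu _ _ H) as K. split; [exact (proj1 HX _ _ K) |].
  intros U HU sub. exact (proj1 (proj2 HX) _ _ _ K (proj1 HU) sub).
Qed.

Lemma continuous_from_pstop_mod {W : ConvSpace} (h : X -> W) :
  is_PsTop W -> continuous h -> @continuous (pstop_mod X) W h.
Proof.
  intros HW Ch F x [HF H]. apply (PsTop_conv_img h F _ HW HF).
  intros U HU sub. exact (Ch _ _ (H U HU sub)).
Qed.

Lemma continuous_from_Cyl_pstop_mod {W : ConvSpace} (H : Cyl X -> W) :
  is_PsTop W -> continuous H -> @continuous (Cyl (pstop_mod X)) W H.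
Proof.
  intros HW CH F [x t] (HF & [_ Hx] & Ht). apply (PsTop_conv_img H F _ HW HF).
  intros U HU sub. apply CH. split; [exact (proj1 HU) | split].
  - apply Hx; [exact (is_ultrafilter_img fst U HU) |]. intros S HS; apply sub, HS.
  - split; [apply is_filter_img, HU |]. intros e He. apply sub, (proj2 Ht e He).
Qed.

End PseudotopologicalModification.

Lemma pstop_mod_good_pushout {B A Y : ConvSpace} (i : B -> A) (f : B -> Y) :
  is_convergence A -> is_convergence Y ->
  good_pushout is_PsTop i f (po_inl i f : A -> pstop_mod (po_space i f)) (po_inr i f).
Proof.
  intros HA HY.
  destruct (po_space_good_pushout i f HA HY) as [(_ & Cl & Cr & Elr & UP) cover glue].
  pose proof (Lim_convergence _ (po_space_Lim i f HA HY)) as HQ.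
  split; [split; [exact (pstop_mod_PsTop HQ) | split; [| split; [| split]]] | exact cover |].
  - exact (continuous_to_pstop_mod HQ _ Cl).
  - exact (continuous_to_pstop_mod HQ _ Cr).
  - exact Elr.
  - intros Z HZ u v Cu Cv Euv.
    destruct (UP Z (PsTop_is_Lim Z HZ) u v Cu Cv Euv) as (h & Ch & hu & hv & _).
    exists h. split; [exact (continuous_from_pstop_mod _ HZ Ch) |].
    split; [exact hu | split; [exact hv |]].
    intros h' _ h'u h'v q. destruct (cover q) as [[a ->] | [y ->]].
    + rewrite h'u, hu; reflexivity.
    + rewrite h'v, hv; reflexivity.
  - intros W HW H1 H2 C1 C2 E12.
    destruct (glue W (PsTop_is_Lim W HW) H1 H2 C1 C2 E12) as (H & CH & HH1 & HH2).
    exists H. split; [exact (continuous_from_Cyl_pstop_mod _ HW CH) | split; assumption].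
Qed.

(** * Cofibrations and weak equivalences *)

Section DoubleCylinder.
Context {X : ConvSpace}.

Lemma continuous_fst_fst : @continuous (Cyl (Cyl X)) X (fun p => fst (fst p)).
Proof.
  exact (continuous_comp (X := Cyl (Cyl X)) (Y := Cyl X) fst fst continuous_fst continuous_fst).
Qed.

Lemma continuous_snd_fst : @continuous (Cyl (Cyl X)) I01_space (fun p => snd (fst p)).
Proof.
  exact (continuous_comp (X := Cyl (Cyl X)) (Y := Cyl X) (Z := I01_space) fst snd
           continuous_fst continuous_snd).
Qed.

Definition cyl_swap (p : Cyl (Cyl X)) : Cyl (Cyl X) := ((fst (fst p), snd p), snd (fst p)).

Lemma continuous_cyl_swap : continuous cyl_swap.
Proof.
  unfold cyl_swap.
  apply (continuous_pair (D := Cyl (Cyl X)) (X := Cyl X));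
    [apply Cyl_conv_filters | | exact continuous_snd_fst].
  apply (continuous_pair (D := Cyl (Cyl X)) (X := X));
    [apply Cyl_conv_filters | exact continuous_fst_fst | exact continuous_snd].
Qed.

Lemma continuous_reparam2 (phi : R -> R -> R) :
  lipschitz01 phi ->
  @continuous (Cyl (Cyl X)) (Cyl X)
    (fun q => (fst (fst q), clamp01 (phi (val (snd (fst q))) (val (snd q))))).
Proof.
  intros Hphi. apply (continuous_pair (D := Cyl (Cyl X)) (X := X));
    [apply Cyl_conv_filters | exact continuous_fst_fst |].
  exact (continuous_lipschitz01 _ _ phi Cyl_conv_filters continuous_snd_fst continuous_snd Hphi).
Qed.

End DoubleCylinder.

Definition strong_deformation_retraction {B A : ConvSpace} (i : B -> A) (r : A -> B) : Prop :=
  continuous r /\ (forall b, r (i b) = b) /\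
  exists D : Cyl A -> A, continuous D /\ (forall a, D (a, I0) = a) /\
    (forall a, D (a, I1) = i (r a)) /\ (forall b t, D (i b, t) = i b).

Lemma homotopy_around_square {B A Y : ConvSpace} (i : B -> A) (g : B -> Y)
    (Psi : Cyl (Cyl A) -> Y) :
  is_convergence A -> is_Lim Y -> continuous Psi ->
  (forall b t s, val t = 0 \/ val t = 1 \/ val s = 1 -> Psi ((i b, t), s) = g b) ->
  exists D : Cyl A -> Y, continuous D /\ (forall a, D (a, I0) = Psi ((a, I0), I0)) /\
    (forall a, D (a, I1) = Psi ((a, I1), I0)) /\ (forall b t, D (i b, t) = g b).
Proof.
  intros HA HY CPsi Hg.
  set (side k := fun p : Cyl A => Psi ((fst p, k), snd p)).
  set (top := fun p : Cyl A => Psi (p, I1)).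
  assert (Cside : forall k, continuous (side k)).
  { intros k. apply (continuous_comp (X := Cyl A) (Y := Cyl (Cyl A)) _ Psi); [| exact CPsi].
    apply (continuous_pair (D := Cyl A) (X := Cyl A));
      [apply Cyl_conv_filters | | apply continuous_snd].
    apply continuous_pair;
      [apply Cyl_conv_filters | apply continuous_fst |
       apply continuous_const_I01, Cyl_conv_filters]. }
  assert (Ctop : continuous top)
    by exact (continuous_comp _ Psi (continuous_incl I1 (is_convergence_Cyl HA)) CPsi).
  exists (hcat (hcat (side I0) top) (hrev (side I1))). split; [| split; [| split]].
  - apply continuous_hcat; [exact HA | exact HY | | apply continuous_hrev, Cside |].
    + apply continuous_hcat; [exact HA | exact HY | apply Cside | exact Ctop | reflexivity].
    + intros a. rewrite hcat_1, hrev_0. reflexivity.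
  - intros a. rewrite !hcat_0. reflexivity.
  - intros a. rewrite hcat_1, hrev_1. reflexivity.
  - intros b. apply hcat_const; [apply hcat_const |];
      intros t; unfold side, top, hrev; simpl; apply Hg.
    + left; exact val_I0.
    + right; right; exact val_I1.
    + right; left; exact val_I1.
Qed.

Section CofibrationCategory.
Variable P : ConvSpace -> Prop.
Hypothesis P_Lim : forall X, P X -> is_Lim X.
Hypothesis P_good_pushouts : forall (B A Y : ConvSpace) (i : B -> A) (f : B -> Y),
  is_convergence A -> is_convergence Y ->
  exists (Q : ConvSpace) (fbar : A -> Q) (ibar : Y -> Q), good_pushout P i f fbar ibar.

Lemma P_convergence X : P X -> is_convergence X.
Proof. intros PX; exact (Lim_convergence X (P_Lim X PX)). Qed.

Lemma pushout_HEP_at k {B A Y Q : ConvSpace} (i : B -> A) (f : B -> Y)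
    (fbar : A -> Q) (ibar : Y -> Q) :
  continuous f -> good_pushout P i f fbar ibar -> HEP_at P k i -> HEP_at P k ibar.
Proof.
  intros Cf [(PQ & Cfb & Cib & Ecomm & _) cover glue] Hi W PW u G Cu CG Eu.
  destruct (Hi W PW (fun a => u (fbar a)) (fun p => G (Icyl f p)) (continuous_comp _ _ Cfb Cu)
              (continuous_comp _ _ (continuous_Icyl f Cf) CG)) as (H1 & C1 & E1 & F1).
  { intros b. rewrite Ecomm. apply Eu. }
  destruct (glue W PW H1 G C1 CG (fun b t => F1 (b, t))) as (H & CH & EH1 & EH2).
  exists H. split; [exact CH | split].
  - intros q. unfold incl. destruct (cover q) as [[a ->] | [y ->]].
    + rewrite EH1. apply E1.
    + rewrite EH2. symmetry; apply Eu.
  - intros [y t]. apply EH2.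
Qed.

Lemma pushout_cof {B A Y Q : ConvSpace} (i : B -> A) (f : B -> Y)
    (fbar : A -> Q) (ibar : Y -> Q) :
  continuous f -> good_pushout P i f fbar ibar -> cof P i -> cof P ibar.
Proof.
  intros Cf HQ (_ & H0 & H1).
  split; [apply HQ | split; eapply pushout_HEP_at; eassumption].
Qed.

(** [i × I] has the homotopy extension property. [rho] below retracts
    [A × I] onto the mapping cylinder [A ∪ B × I] of [i]; through it a
    homotopy of homotopies is read off with the two interval coordinates swapped. *)
Lemma HEP_Cyl {B A : ConvSpace} (i : B -> A) :
  is_convergence B -> is_convergence A -> HEP_at P I0 i ->
  forall Y, P Y -> forall (F : Cyl A -> Y) (G : Cyl (Cyl B) -> Y),
  continuous F -> continuous G -> (forall b t, F (i b, t) = G ((b, t), I0)) ->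
  exists Psi : Cyl (Cyl A) -> Y, continuous Psi /\
    (forall a t, Psi ((a, t), I0) = F (a, t)) /\ (forall b t s, Psi ((i b, t), s) = G ((b, t), s)).
Proof.
  intros HB HA Hi Y PY F G CF CG FG.
  destruct (P_good_pushouts B A (Cyl B) i (incl I0) HA (is_convergence_Cyl HB))
    as (M & inA & inC & [(PM & CA & CC & Ec & _) _ glue]).
  destruct (Hi M PM inA inC CA CC Ec) as (rho & Crho & rho0 & rhoi).
  destruct (glue Y PY F (fun q => G (cyl_swap q)) CF
              (continuous_comp _ G continuous_cyl_swap CG) FG) as (Ga & CGa & GaA & GaC).
  exists (fun p => Ga (Icyl rho (cyl_swap p))). split; [| split].
  - apply (continuous_comp _ Ga); [| exact CGa].
    exact (continuous_comp _ _ continuous_cyl_swap (continuous_Icyl rho Crho)).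
  - intros a t. unfold Icyl, cyl_swap; simpl.
    change (a, I0) with (incl I0 a). rewrite rho0. apply GaA.
  - intros b t s. unfold Icyl, cyl_swap; simpl.
    change (i b, s) with (Icyl i (b, s)). rewrite rhoi. apply GaC.
Qed.

Lemma trivial_cof_retraction {B A : ConvSpace} (i : B -> A) :
  P B -> P A -> cof P i -> we i ->
  exists r : A -> B, continuous r /\ (forall b, r (i b) = b) /\
    homotopic (fun a => a) (fun a => i (r a)).
Proof.
  intros PB PA (Ci & Hi0 & _) (_ & g & Cg & ig & (K & CK & K0 & K1)).
  destruct (Hi0 B PB g K Cg CK (fun b => eq_sym (K0 b))) as (H & CH & H0 & Hi).
  exists (fun a => H (a, I1)).
  split; [exact (continuous_comp _ H (continuous_incl I1 (P_convergence A PA)) CH) | split].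
  - intros b. change (i b, I1) with (Icyl i (b, I1)). rewrite Hi. apply K1.
  - apply homotopic_trans with (g := fun a => i (g a));
      [exact (P_convergence A PA) | exact (P_Lim A PA) | exact (homotopic_sym _ _ ig) |].
    apply (homotopic_comp_l g (fun a => H (a, I1)) i Ci).
    exists H. split; [exact CH | split; [exact H0 | reflexivity]].
Qed.

(* From a retraction [r] and a homotopy [L : 1 ≃ i r] one builds
   [K2 : 1 ≃ i r e] whose restriction to [B] is a loop that [L] itself
   contracts (via the tent function [max (|1 - 2t|, s)]); extending that
   contraction by [HEP_Cyl] and going around the remaining three sides of the
   square gives a homotopy rel [B]. *)
Lemma trivial_cof_sdr {B A : ConvSpace} (i : B -> A) :
  P B -> P A -> cof P i -> we i -> exists r, strong_deformation_retraction i r.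
Proof.
  intros PB PA Hcof Hwe. pose proof (P_convergence A PA) as HA.
  destruct (trivial_cof_retraction i PB PA Hcof Hwe) as (r & Cr & ri & (L & CL & L0 & L1)).
  destruct Hcof as (Ci & Hi0 & _). unfold incl in L0, L1.
  destruct (Hi0 A PA (fun a => a) (hrev (fun p => L (Icyl i p))) continuous_id
              (continuous_hrev _ (continuous_comp _ _ (continuous_Icyl i Ci) CL)))
    as (N & CN & N0 & Ni).
  { intros b. unfold incl. rewrite hrev_0. unfold Icyl; simpl. rewrite L1, ri. reflexivity. }
  unfold incl in N0. set (e := fun a => N (a, I1)).
  assert (Ce : continuous e) by exact (continuous_comp _ N (continuous_incl I1 HA) CN).
  assert (ei : forall b, e (i b) = i b).
  { intros b. unfold e. change (i b, I1) with (Icyl i (b, I1)). rewrite Ni, hrev_1. apply L0. }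
  set (K2 := hcat N (fun p => L (Icyl e p))).
  assert (CK2 : continuous K2).
  { apply continuous_hcat; [exact HA | exact (P_Lim A PA) | exact CN |
      exact (continuous_comp _ L (continuous_Icyl e Ce) CL) |].
    intros a. unfold Icyl; simpl. rewrite L0. reflexivity. }
  set (tent := fun t s => Rmax (Rabs (1 - 2 * t)) s).
  set (Phi := fun p : Cyl (Cyl B) =>
                L (i (fst (fst p)), clamp01 (tent (val (snd (fst p))) (val (snd p))))).
  assert (CPhi : continuous Phi).
  { exact (continuous_comp _ _ (continuous_reparam2 tent lipschitz01_tent)
             (continuous_comp _ L (continuous_Icyl i Ci) CL)). }
  destruct (HEP_Cyl i (P_convergence B PB) HA Hi0 A PA K2 Phi CK2 CPhi)
    as (Psi & CPsi & Psi0 & Psii).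
  { intros b t. pose proof (val_bounds t). unfold K2, Phi, hcat, tent; simpl. destruct Rle_dec.
    - change (i b, clamp01 (2 * val t)) with (Icyl i (b, clamp01 (2 * val t))). rewrite Ni.
      unfold hrev, Icyl; simpl. do 2 f_equal. apply val_inj. I01_arith.
    - unfold Icyl; simpl. rewrite ei. do 2 f_equal. apply val_inj. I01_arith. }
  destruct (homotopy_around_square i i Psi HA (P_Lim A PA) CPsi) as (D & CD & D0 & D1 & Di).
  { intros b t s Hts. rewrite Psii. unfold Phi; simpl.
    rewrite (clamp01_val _ I1), L1, ri; [reflexivity |].
    pose proof (val_bounds t); pose proof (val_bounds s).
    unfold tent; destruct Hts as [Ht | [Ht | Hs]]; rewrite ?Ht, ?Hs; I01_arith. }
  exists (fun a => r (e a)). split; [exact (continuous_comp e r Ce Cr) | split].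
  - intros b. rewrite ei. apply ri.
  - exists D. split; [exact CD | split; [| split; [| exact Di]]].
    + intros a. rewrite D0, Psi0. unfold K2. rewrite hcat_0. apply N0.
    + intros a. rewrite D1, Psi0. unfold K2. rewrite hcat_1. unfold Icyl; simpl. apply L1.
Qed.

Lemma pushout_we_ibar {B A Y Q : ConvSpace} (i : B -> A) (f : B -> Y)
    (fbar : A -> Q) (ibar : Y -> Q) :
  P B -> P A -> P Y -> continuous f -> good_pushout P i f fbar ibar -> cof P i -> we i -> we ibar.
Proof.
  intros PB PA PY Cf [(PQ & Cfb & Cib & Ecomm & UP) cover glue] Hcof Hwe.
  destruct (trivial_cof_sdr i PB PA Hcof Hwe) as (r & Cr & ri & (D & CD & D0 & D1 & Di)).
  destruct (UP Y PY (fun a => f (r a)) (fun y => y) (continuous_comp _ _ Cr Cf) continuous_id)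
    as (rb & Crb & rb_fbar & rb_ibar & _).
  { intros b. rewrite ri. reflexivity. }
  destruct (glue Q PQ (fun p => fbar (D p)) (fun p => ibar (fst p)) (continuous_comp _ _ CD Cfb)
              (continuous_comp (X := Cyl Y) fst ibar continuous_fst Cib)) as (H & CH & H1 & H2).
  { intros b t. simpl. rewrite Di. apply Ecomm. }
  split; [exact Cib |]. exists rb. split; [exact Crb | split].
  - apply homotopic_sym. exists H. split; [exact CH |].
    split; intros q; unfold incl; destruct (cover q) as [[a ->] | [y ->]].
    + rewrite H1, D0. reflexivity.
    + rewrite H2. reflexivity.
    + rewrite H1, D1, rb_fbar, Ecomm. reflexivity.
    + rewrite H2, rb_ibar. reflexivity.
  - apply homotopic_eq; [exact continuous_id | exact rb_ibar].
Qed.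

Section MappingCylinder.
Context {X Y Z : ConvSpace} (f : X -> Y) (ka : Cyl X -> Z) (s : Y -> Z).
Hypotheses (PX : P X) (PY : P Y) (Cf : continuous f).
Hypothesis (HZ : good_pushout P (incl I0) f ka s).

Lemma mapping_cylinder_deformation :
  exists (p : Z -> Y) (Hs : Cyl Z -> Z), we p /\
    (forall x t, p (ka (x, t)) = f x) /\ (forall y, p (s y) = y) /\ continuous Hs /\
    (forall z, Hs (z, I0) = s (p z)) /\ (forall z, Hs (z, I1) = z) /\
    (forall x t, Hs (ka (x, I1), t) = ka (x, t)).
Proof.
  destruct HZ as [(PZ & Cka & Cs & Ecomm & UP) cover glue].
  destruct (UP Y PY (fun q => f (fst q)) (fun y => y)
              (continuous_comp (X := Cyl X) fst f continuous_fst Cf) continuous_id)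
    as (p & Cp & p_ka & p_s & _).
  { intros x; reflexivity. }
  set (shrink := fun q : Cyl (Cyl X) =>
         (fst (fst q), clamp01 (val (snd (fst q)) * val (snd q))) : Cyl X).
  assert (Cshrink : continuous shrink).
  { apply (continuous_reparam2 (fun a b => a * b)), (lipschitz01_bilinear 1 0); [lra | lra |].
    intros; ring. }
  destruct (glue Z PZ (fun q => ka (shrink q)) (fun q => s (fst q))
              (continuous_comp _ _ Cshrink Cka)
              (continuous_comp (X := Cyl Y) fst s continuous_fst Cs))
    as (Hs & CHs & Hs_ka & Hs_s).
  { intros x t. simpl. rewrite <- Ecomm. unfold shrink, incl; simpl. do 2 f_equal.
    apply clamp01_val. unfold val; simpl; ring. }
  assert (Hs0 : forall z, Hs (z, I0) = s (p z)).
  { intros z. destruct (cover z) as [[[x t] ->] | [y ->]].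
    - rewrite Hs_ka, p_ka. simpl. rewrite <- (Ecomm x). unfold shrink, incl; simpl. do 2 f_equal.
      apply clamp01_val. unfold val; simpl; ring.
    - rewrite Hs_s, p_s. reflexivity. }
  assert (Hs1 : forall z, Hs (z, I1) = z).
  { intros z. destruct (cover z) as [[[x t] ->] | [y ->]].
    - rewrite Hs_ka. unfold shrink; simpl. do 2 f_equal. apply clamp01_val. unfold val; simpl; ring.
    - rewrite Hs_s. reflexivity. }
  exists p, Hs. split.
  { split; [exact Cp |]. exists s. split; [exact Cs | split].
    - apply homotopic_eq; [exact continuous_id | exact p_s].
    - exists Hs. split; [exact CHs | split; [exact Hs0 | exact Hs1]]. }
  split; [intros x t; apply p_ka | split; [exact p_s | split; [exact CHs |]]].
  split; [exact Hs0 | split; [exact Hs1 |]].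
  intros x t. rewrite Hs_ka. unfold shrink; simpl. do 2 f_equal.
  apply clamp01_val. unfold val; simpl; ring.
Qed.

Lemma mapping_cylinder_top_cof : cof P (fun x => ka (x, I1)).
Proof.
  destruct HZ as [(_ & Cka & Cs & Ecomm & _) cover glue].
  pose proof (P_convergence X PX) as HX.
  assert (H0 : HEP_at P I0 (fun x => ka (x, I1))).
  { intros W PW F G CF CG FG.
    set (stretch := fun q : Cyl (Cyl X) =>
           (fst (fst q), clamp01 (1 / 2 * (val (snd (fst q)) * (1 + val (snd q))))) : Cyl X).
    assert (Cstretch : continuous stretch).
    { apply (continuous_reparam2 (fun a b => 1 / 2 * (a * (1 + b)))).
      apply (lipschitz01_bilinear (1 / 2) 1); [lra | lra | reflexivity]. }
    set (K := hcat (fun p => F (ka p)) G).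
    assert (CK : continuous K)
      by exact (continuous_hcat _ _ HX (P_Lim W PW) (continuous_comp _ _ Cka CF) CG FG).
    destruct (glue W PW (fun q => K (stretch q)) (fun q => F (s (fst q)))
                (continuous_comp _ _ Cstretch CK)
                (continuous_comp (X := Cyl Y) fst _ continuous_fst (continuous_comp _ _ Cs CF)))
      as (H & CH & H_ka & H_s).
    { intros x t. unfold K, stretch; simpl. rewrite hcat_half by (pose proof (val_bounds t); nra).
      destruct Rle_dec; [| lra]. rewrite <- Ecomm. unfold incl. do 3 f_equal.
      apply clamp01_val. unfold val; simpl; ring. }
    exists H. split; [exact CH | split].
    - intros z. unfold incl. destruct (cover z) as [[[x t] ->] | [y ->]]; [| apply H_s].
      rewrite H_ka. unfold K, stretch; simpl. pose proof (val_bounds t).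
      rewrite hcat_half by nra. destruct Rle_dec; [| nra]. do 3 f_equal. apply clamp01_val. ring.
    - intros [x u]. unfold Icyl; simpl. rewrite H_ka. unfold K, stretch; simpl.
      pose proof (val_bounds u).
      rewrite hcat_half by (unfold val in *; simpl; nra). destruct Rle_dec as [Hu | Hu].
      + assert (E : u = I0) by (apply val_inj; unfold val in *; simpl in *; lra). subst u.
        rewrite (clamp01_val _ I1) by (unfold val; simpl; ring). apply FG.
      + f_equal. f_equal. apply clamp01_val. unfold val; simpl; ring. }
  split; [exact (continuous_comp _ ka (continuous_incl I1 HX) Cka) |].
  split; [exact H0 | exact (HEP_at_1_of_0 P _ H0)].
Qed.

Lemma mapping_cylinder_top_we : we f -> we (fun x => ka (x, I1)).
Proof.
  intros Wf. pose proof HZ as [(PZ & _) _ _].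
  destruct mapping_cylinder_deformation as (p & _ & Wp & p_ka & _).
  apply (we_cancel_l _ p (P_Lim Z PZ) (proj1 mapping_cylinder_top_cof) (proj1 Wp) Wp).
  replace (fun x => p (ka (x, I1))) with f
    by (apply functional_extensionality; intros x; symmetry; apply p_ka).
  exact Wf.
Qed.

End MappingCylinder.

(** [P1 = A ∪_B Z] for the mapping cylinder [Z] of [f] collapses onto
    [Q = A ∪_B Y] by [c]; [q] pushes [A] back along a homotopy [E] from [io]
    obtained from the HEP of [i]. *)
Section CylinderCollapse.
Context {B A Y Q Z P1 : ConvSpace} (i : B -> A) (f : B -> Y) (fbar : A -> Q) (ibar : Y -> Q).
Context (ka : Cyl B -> Z) (s : Y -> Z) (p : Z -> Y) (Hs : Cyl Z -> Z).
Context (jb : Z -> P1) (io : A -> P1) (c : P1 -> Q) (E : Cyl A -> P1) (q : Q -> P1).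
Hypotheses (HQ : good_pushout P i f fbar ibar)
  (HP1 : good_pushout P (fun b => ka (b, I1)) i jb io).
Hypotheses (CHs : continuous Hs) (p_ka : forall b t, p (ka (b, t)) = f b)
  (p_s : forall y, p (s y) = y) (Hs0 : forall z, Hs (z, I0) = s (p z))
  (Hs1 : forall z, Hs (z, I1) = z) (Hs_top : forall b t, Hs (ka (b, I1), t) = ka (b, t)).
Hypotheses (Cc : continuous c) (c_jb : forall z, c (jb z) = ibar (p z))
  (c_io : forall a, c (io a) = fbar a).
Hypotheses (CE : continuous E) (E0 : forall a, E (a, I0) = io a)
  (Ei : forall b t, E (i b, t) = jb (ka (b, I01_rev t))).
Hypotheses (q_fbar : forall a, q (fbar a) = E (a, I1)) (q_ibar : forall y, q (ibar y) = jb (s y)).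

Lemma collapse_section_homotopic : homotopic (fun x => c (q x)) (fun x => x).
Proof.
  destruct HQ as [(PQ & _ & Cib & _) cover glue].
  destruct (glue Q PQ (fun p0 => c (hrev E p0)) (fun p0 => ibar (fst p0))
              (continuous_comp _ _ (continuous_hrev _ CE) Cc)
              (continuous_comp (X := Cyl Y) fst ibar continuous_fst Cib)) as (H & CH & H_A & H_Y).
  { intros b t. unfold hrev; simpl. rewrite Ei, I01_rev_involutive, c_jb, p_ka. reflexivity. }
  exists H. split; [exact CH |].
  split; intros x; unfold incl; destruct (cover x) as [[a ->] | [y ->]].
  - rewrite H_A, hrev_0, q_fbar. reflexivity.
  - rewrite H_Y, q_ibar, c_jb, p_s. reflexivity.
  - rewrite H_A, hrev_1, E0, c_io. reflexivity.
  - rewrite H_Y. reflexivity.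
Qed.

Lemma collapse_retraction_homotopic : homotopic (fun x => q (c x)) (fun x => x).
Proof.
  destruct HP1 as [(PP1 & Cjb & _) cover glue].
  destruct (glue P1 PP1 (fun p0 => jb (Hs p0)) (hrev E) (continuous_comp _ _ CHs Cjb)
              (continuous_hrev _ CE)) as (H & CH & H_Z & H_A).
  { intros b t. rewrite Hs_top. unfold hrev; simpl. rewrite Ei, I01_rev_involutive. reflexivity. }
  exists H. split; [exact CH |].
  split; intros x; unfold incl; destruct (cover x) as [[z ->] | [a ->]].
  - rewrite H_Z, Hs0, c_jb, q_ibar. reflexivity.
  - rewrite H_A, hrev_0, c_io, q_fbar. reflexivity.
  - rewrite H_Z, Hs1. reflexivity.
  - rewrite H_A, hrev_1, E0. reflexivity.
Qed.

End CylinderCollapse.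

(** Factor [f] as [p ∘ j] through its mapping cylinder [Z]; then [fbar] is
    the pushout [io] of the trivial cofibration [j] followed by the collapse [c]. *)
Lemma pushout_we_fbar {B A Y Q : ConvSpace} (i : B -> A) (f : B -> Y)
    (fbar : A -> Q) (ibar : Y -> Q) :
  P B -> P A -> P Y -> continuous f -> good_pushout P i f fbar ibar -> cof P i -> we f -> we fbar.
Proof.
  intros PB PA PY Cf HQ (Ci & Hi0 & _) Wf. pose proof HQ as [(PQ & Cfb & Cib & Ecomm & UP) _ _].
  destruct (P_good_pushouts B (Cyl B) Y (incl I0) f (is_convergence_Cyl (P_convergence B PB))
              (P_convergence Y PY)) as (Z & ka & s & HZ).
  pose proof HZ as [(PZ & Cka & Cs & ka_s & _) _ _].
  destruct (mapping_cylinder_deformation f ka s PY Cf HZ)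
    as (p & Hs & Wp & p_ka & p_s & CHs & Hs0 & Hs1 & Hs_top).
  set (j := fun b => ka (b, I1)).
  pose proof (mapping_cylinder_top_cof f ka s PB HZ) as Hj.
  pose proof (mapping_cylinder_top_we f ka s PB PY Cf HZ Wf) as Wj.
  destruct (P_good_pushouts B Z A j i (P_convergence Z PZ) (P_convergence A PA))
    as (P1 & jb & io & HP1).
  pose proof HP1 as [(PP1 & Cjb & Cio & Ejb & UP1) _ _].
  pose proof (pushout_we_ibar j i jb io PB PZ PA Ci HP1 Hj Wj) as Wio.
  destruct (UP1 Q PQ (fun z => ibar (p z)) fbar (continuous_comp _ _ (proj1 Wp) Cib) Cfb)
    as (c & Cc & c_jb & c_io & _).
  { intros b. unfold j. rewrite p_ka. symmetry; apply Ecomm. }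
  destruct (Hi0 P1 PP1 io (hrev (fun z => jb (ka z))) Cio
              (continuous_hrev _ (continuous_comp _ _ Cka Cjb)))
    as (E & CE & E0 & Ei).
  { intros b. unfold incl. rewrite hrev_0. symmetry; apply Ejb. }
  destruct (UP P1 PP1 (fun a => E (a, I1)) (fun y => jb (s y))
              (continuous_comp _ E (continuous_incl I1 (P_convergence A PA)) CE)
              (continuous_comp _ _ Cs Cjb))
    as (q & Cq & q_fbar & q_ibar & _).
  { intros b. change (i b, I1) with (Icyl i (b, I1)). rewrite Ei, hrev_1.
    exact (f_equal jb (ka_s b)). }
  assert (Wc : we c).
  { split; [exact Cc |]. exists q. split; [exact Cq | split].
    - exact (collapse_section_homotopic i f fbar ibar ka s p jb io c E q HQ p_ka p_s
               Cc c_jb c_io CE E0 (fun b t => Ei (b, t)) q_fbar q_ibar).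
    - exact (collapse_retraction_homotopic i fbar ibar ka s p Hs jb io c E q HP1 CHs Hs0 Hs1 Hs_top
               c_jb c_io CE E0 (fun b t => Ei (b, t)) q_fbar q_ibar). }
  replace fbar with (fun a => c (io a)) by (apply functional_extensionality; exact c_io).
  exact (we_comp io c (P_Lim A PA) (P_Lim Q PQ) Cio Cc Wio Wc).
Qed.

Lemma is_pushout_unique {B A Y Q Q' : ConvSpace} (i : B -> A) (f : B -> Y)
    (fbar : A -> Q) (ibar : Y -> Q) (fbar' : A -> Q') (ibar' : Y -> Q') :
  is_pushout P i f fbar ibar -> is_pushout P i f fbar' ibar' ->
  exists phi : Q' -> Q, is_iso phi /\
    (forall a, phi (fbar' a) = fbar a) /\ (forall y, phi (ibar' y) = ibar y).
Proof.
  intros (PQ & Cfb & Cib & Ec & UP) (PQ' & Cfb' & Cib' & Ec' & UP').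
  destruct (UP' Q PQ fbar ibar Cfb Cib Ec) as (phi & Cphi & phi_fb & phi_ib & _).
  destruct (UP Q' PQ' fbar' ibar' Cfb' Cib' Ec') as (psi & Cpsi & psi_fb & psi_ib & _).
  destruct (UP' Q' PQ' fbar' ibar' Cfb' Cib' Ec') as (id' & _ & _ & _ & uniq').
  destruct (UP Q PQ fbar ibar Cfb Cib Ec) as (id & _ & _ & _ & uniq).
  exists phi. split; [split; [exact Cphi |] | split; assumption].
  exists psi. split; [exact Cpsi | split]; intros x.
  - rewrite (uniq' (fun x => psi (phi x))), (uniq' (fun x => x)); try reflexivity.
    + exact continuous_id.
    + apply continuous_comp; assumption.
    + intros a; rewrite phi_fb, psi_fb; reflexivity.
    + intros y; rewrite phi_ib, psi_ib; reflexivity.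
  - rewrite (uniq (fun x => phi (psi x))), (uniq (fun x => x)); try reflexivity.
    + exact continuous_id.
    + apply continuous_comp; assumption.
    + intros a; rewrite psi_fb, phi_fb; reflexivity.
    + intros y; rewrite psi_ib, phi_ib; reflexivity.
Qed.

Lemma cofibration_pushouts {B A Y : ConvSpace} (i : B -> A) (f : B -> Y) :
  P B -> P A -> P Y -> cof P i -> continuous f ->
  (exists (Q : ConvSpace) (fbar : A -> Q) (ibar : Y -> Q), is_pushout P i f fbar ibar) /\
  (forall (Q : ConvSpace) (fbar : A -> Q) (ibar : Y -> Q), is_pushout P i f fbar ibar ->
     cof P ibar /\ (we f -> we fbar) /\ (we i -> we ibar)).
Proof.
  intros PB PA PY Hi Cf.
  destruct (P_good_pushouts B A Y i f (P_convergence A PA) (P_convergence Y PY))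
    as (Q' & fb' & ib' & HQ').
  split; [exists Q', fb', ib'; exact (gp_pushout _ _ _ _ _ HQ') |].
  intros Q fbar ibar HQ. pose proof HQ' as [(PQ' & Cfb' & Cib' & _) _ _].
  destruct (is_pushout_unique i f fbar ibar fb' ib' HQ (gp_pushout _ _ _ _ _ HQ'))
    as (phi & Iphi & phi_fb & phi_ib).
  replace fbar with (fun a => phi (fb' a)) by (apply functional_extensionality; exact phi_fb).
  replace ibar with (fun y => phi (ib' y)) by (apply functional_extensionality; exact phi_ib).
  pose proof (P_Lim Q (proj1 HQ)) as LQ.
  split; [| split].
  - exact (cof_comp P ib' phi (pushout_cof i f fb' ib' Cf HQ' Hi) (cof_iso P phi Iphi)).
  - intros Wf. apply (we_comp fb' phi (P_Lim A PA) LQ Cfb' (proj1 Iphi));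
      [| exact (we_iso phi Iphi)].
    exact (pushout_we_fbar i f fb' ib' PB PA PY Cf HQ' Hi Wf).
  - intros Wi. apply (we_comp ib' phi (P_Lim Y PY) LQ Cib' (proj1 Iphi));
      [| exact (we_iso phi Iphi)].
    exact (pushout_we_ibar i f fb' ib' PB PA PY Cf HQ' Hi Wi).
Qed.

Lemma mapping_cylinder_factorization {X Y : ConvSpace} (f : X -> Y) :
  P X -> P Y -> continuous f ->
  exists (Z : ConvSpace) (j : X -> Z) (p : Z -> Y),
    P Z /\ cof P j /\ we p /\ forall x, p (j x) = f x.
Proof.
  intros PX PY Cf.
  destruct (P_good_pushouts X (Cyl X) Y (incl I0) f (is_convergence_Cyl (P_convergence X PX))
              (P_convergence Y PY)) as (Z & ka & s & HZ).
  destruct (mapping_cylinder_deformation f ka s PY Cf HZ) as (p & _ & Wp & p_ka & _).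
  exists Z, (fun x => ka (x, I1)), p.
  split; [exact (proj1 (gp_pushout _ _ _ _ _ HZ)) |].
  split; [exact (mapping_cylinder_top_cof f ka s PX HZ) | split; [exact Wp | intros x; apply p_ka]].
Qed.

(* The HEP of [k] extends the homotopy [g k ≃ 1] to [Q]; its end is a
   retraction of [k]. *)
Lemma P_fibrant (X : ConvSpace) : P X -> fibrant P X.
Proof.
  intros PX Q PQ k (Ck & Hk0 & _) (_ & g & Cg & _ & (K & CK & K0 & K1)).
  destruct (Hk0 X PX g K Cg CK (fun x => eq_sym (K0 x))) as (H & CH & H0 & Hk).
  exists (fun q => H (q, I1)).
  split; [exact (continuous_comp _ H (continuous_incl I1 (P_convergence Q PQ)) CH) |].
  intros x. change (k x, I1) with (Icyl k (x, I1)). rewrite Hk. apply K1.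
Qed.

Theorem cofibration_category_of_good_pushouts : cofibration_category P.
Proof.
  split; [| split; [| split; [| split; [| split]]]].
  - intros X Y _ _ f Hf. split; [exact (cof_iso P f Hf) | exact (we_iso f Hf)].
  - intros X Y Z PX PY PZ f g Cf Cg.
    split; [| split]; [apply we_comp | apply we_cancel_r | apply we_cancel_l]; auto.
  - intros X Y Z _ _ _ f g. apply cof_comp.
  - intros B A Y PB PA PY i f Hi Cf. exact (cofibration_pushouts i f PB PA PY Hi Cf).
  - intros X Y PX PY f Cf. exact (mapping_cylinder_factorization f PX PY Cf).
  - intros X PX. exists X, (fun x => x).
    assert (Iid : is_iso (fun x : X => x)).
    { split; [exact continuous_id |].
      exists (fun x => x). split; [exact continuous_id | split; reflexivity]. }
    split; [exact PX | split; [exact (cof_iso P _ Iid) |]].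
    split; [exact (we_iso _ Iid) | exact (P_fibrant X PX)].
Qed.

End CofibrationCategory.

Theorem mainTheorem4 : cofibration_category is_PsTop /\ cofibration_category is_Lim.
Proof.
  split; apply cofibration_category_of_good_pushouts.
  - exact PsTop_is_Lim.
  - intros B A Y i f HA HY. do 3 eexists. exact (pstop_mod_good_pushout i f HA HY).
  - exact (fun X HX => HX).
  - intros B A Y i f HA HY. do 3 eexists. exact (po_space_good_pushout i f HA HY).
Qed.
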